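(* Let $c,g,d\in\mathbb{R}$, $t_0>0$, and let $\theta(x,t)$ be a solution on $\mathbb{R}\times[0,t_0]$ of $$\theta_t+c\,\theta_x+g\,\theta\theta_x+d\,\theta_{xxx}=0$$ which is smooth and such that $\partial_t^2\theta$ and $\partial_x^k\theta$ for $0\le k\le 5$ satisfy $|\cdot|\le C(1+x^2)^{-1}$ uniformly for $t\in[0,t_0]$. For a space step $h>0$ and time step $\tau>0$ put $x_i=ih$ ($i\in\mathbb{Z}$), $t_j=j\tau$, and define $\theta^j_i$ by $\theta^0_i=\theta(x_i,0)$ and the explicit scheme $$\frac{\theta^{j+1}_i-\theta^j_i}{\tau}+c\frac{\theta^j_{i+1}-\theta^j_{i-1}}{2h}+g\,\theta^j_i\frac{\theta^j_{i+1}-\theta^j_{i-1}}{2h}+e\frac{\theta^j_{i+2}-2\theta^j_{i+1}+2\theta^j_{i-1}-\theta^j_{i-2}}{2h^3}=0,\qquad e=d-\frac{c h^2}{6}.$$ Assume $\tau\le K h^6$ for a fixed constant $K$. Then there is a constant $M$, independent of $h$ and $\tau$, such that for all sufficiently small $h$ and all $j$ with $j\tau\le t_0$, $$\Big(\sum_{i\in\mathbb{Z}}\big(\theta^j_i-\theta(x_i,t_j)\big)^2h\Big)^{1/2}\le M(\tau+h^2).$$ In particular the scheme converges in the discrete $L^2$ norm to the exact solution. *)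

From Stdlib Require Import Reals Lra Lia ZArith List.
From Coquelicot Require Import Coquelicot.
Open Scope R_scope.

(* Iterated partial derivative of f : R -> R -> R (f x t).
   A list of booleans: true = d/dx, false = d/dt; the head is applied last. *)
Fixpoint pd (l : list bool) (f : R -> R -> R) : R -> R -> R :=
  match l with
  | nil => f
  | b :: l' =>
      if b then fun x t => Derive (fun y => pd l' f y t) x
      else fun x t => Derive (fun s => pd l' f x s) t
  end.

Definition dx (k : nat) (f : R -> R -> R) : R -> R -> R := pd (repeat true k) f.
Definition dt (k : nat) (f : R -> R -> R) : R -> R -> R := pd (repeat false k) f.

Definition smooth2 (f : R -> R -> R) : Prop :=
  forall (l : list bool) (x t : R),
    ex_derive (fun y => pd l f y t) x /\
    ex_derive (fun s => pd l f x s) t /\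
    continuous (fun p : R * R => pd l f (fst p) (snd p)) (x, t).

Fixpoint theta_disc (c g d : R) (theta : R -> R -> R) (h tau : R)
    (j : nat) (i : Z) : R :=
  match j with
  | O => theta (IZR i * h) 0
  | S j' =>
      let u := fun k : Z => theta_disc c g d theta h tau j' k in
      let e := d - c * h ^ 2 / 6 in
      u i - tau * ( c * (u (i + 1)%Z - u (i - 1)%Z) / (2 * h)
                  + g * u i * (u (i + 1)%Z - u (i - 1)%Z) / (2 * h)
                  + e * (u (i + 2)%Z - 2 * u (i + 1)%Z + 2 * u (i - 1)%Z
                         - u (i - 2)%Z) / (2 * h ^ 3) )
  end.

Definition err_partial (c g d : R) (theta : R -> R -> R) (h tau : R)
    (j : nat) (N : nat) : R :=
  sum_f_R0 (fun n =>
    let i := (Z.of_nat n - Z.of_nat N)%Z in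
    (theta_disc c g d theta h tau j i - theta (IZR i * h) (INR j * tau)) ^ 2 * h)
    (2 * N).

From Stdlib Require Import Reals Lra Lia ZArith List.
From Coquelicot Require Import Coquelicot.
Open Scope R_scope.

(* The grid error [err j i = theta^j_i - theta(x_i, t_j)] obeys
   [err (j+1) = err j - tau err_op j - tau trunc_err j], where [trunc_err] is the truncation
   error of the exact solution. By Taylor's theorem and the PDE,
   [trunc_err j i = O((tau + h^2) / (1 + x_i^2))], so [sum_i trunc_err^2 = O((tau + h^2)^2 / h)].
   Squaring the recursion and summing over [i], the linear part of [sum_i err * err_op]
   telescopes (summation by parts), the nonlinear terms are [O(sum_i err^2)] as long as
   [|err| <= h] pointwise, and [tau^2 sum_i err_op^2 = O(tau^2 h^-6 sum_i err^2)] is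
   [O(tau sum_i err^2)] because [tau <= K h^6]. The discrete Gronwall lemma then gives
   [h sum_i err^2 = O((tau + h^2)^2)], and the pointwise bound [|err| <= h] is recovered
   inductively since [sum_i err^2 = O(h^3)] is below [h^2] for small [h]. *)

(** * Taylor estimates in one variable *)

Definition smooth1 (f : R -> R) : Prop := forall k x, ex_derive_n f k x.

Lemma Derive_n_reflect (f : R -> R) : smooth1 f -> forall k y,
  Derive_n (fun z => f (- z)) k y = (-1) ^ k * Derive_n f k (- y).
Proof.
  intros Hs k. induction k as [|k IH]; intros y.
  - simpl. ring.
  - simpl Derive_n.
    rewrite (Derive_ext _ (fun y => (-1) ^ k * Derive_n f k (- y)) y IH).
    rewrite Derive_scal, (Derive_comp (Derive_n f k) (fun y => - y) y).
    + rewrite Derive_opp, (Derive_ext (fun y => y) id), Derive_id by reflexivity.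
      simpl. ring.
    + exact (Hs (S k) (- y)).
    + auto_derive; exact I.
Qed.

Lemma smooth1_reflect (f : R -> R) : smooth1 f -> smooth1 (fun z => f (- z)).
Proof.
  intros Hs [|k] y; [exact I |].
  apply (ex_derive_ext (fun y => (-1) ^ k * Derive_n f k (- y))).
  { intros t. symmetry. apply Derive_n_reflect; auto. }
  apply ex_derive_scal, (ex_derive_comp (Derive_n f k) (fun y => - y)).
  - exact (Hs (S k) (- y)).
  - auto_derive; exact I.
Qed.

Definition taylor_poly (f : R -> R) (n : nat) (a b : R) : R :=
  sum_f_R0 (fun m => (b - a) ^ m / INR (fact m) * Derive_n f m a) n.

Lemma taylor_poly1 f a b : taylor_poly f 1 a b = f a + (b - a) * Derive_n f 1 a.
Proof. unfold taylor_poly. simpl. field. Qed.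

Lemma taylor_poly2 f a b : taylor_poly f 2 a b =
  f a + (b - a) * Derive_n f 1 a + (b - a) ^ 2 / 2 * Derive_n f 2 a.
Proof. unfold taylor_poly. simpl. field. Qed.

Lemma taylor_poly4 f a b : taylor_poly f 4 a b =
  f a + (b - a) * Derive_n f 1 a + (b - a) ^ 2 / 2 * Derive_n f 2 a
  + (b - a) ^ 3 / 6 * Derive_n f 3 a + (b - a) ^ 4 / 24 * Derive_n f 4 a.
Proof. unfold taylor_poly. simpl. field. Qed.

Lemma taylor_remainder_fwd (f : R -> R) n a b B : smooth1 f -> a < b ->
  (forall z, a <= z <= b -> Rabs (Derive_n f (S n) z) <= B) ->
  Rabs (f b - taylor_poly f n a b) <= (b - a) ^ S n / INR (fact (S n)) * B.
Proof.
  intros Hs Hab HB.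
  destruct (Taylor_Lagrange f n a b Hab) as [z [Hz ->]]; [intros; apply Hs |].
  unfold taylor_poly.
  replace (_ + _ - _) with ((b - a) ^ S n / INR (fact (S n)) * Derive_n f (S n) z) by ring.
  assert (Hc : 0 <= (b - a) ^ S n / INR (fact (S n))).
  { apply Rdiv_le_0_compat; [apply pow_le; lra | apply INR_fact_lt_0]. }
  rewrite Rabs_mult, (Rabs_pos_eq _ Hc).
  apply Rmult_le_compat_l; auto. apply HB; lra.
Qed.

Lemma taylor_remainder_bwd (f : R -> R) n a b B : smooth1 f -> b < a ->
  (forall z, b <= z <= a -> Rabs (Derive_n f (S n) z) <= B) ->
  Rabs (f b - taylor_poly f n a b) <= (a - b) ^ S n / INR (fact (S n)) * B.
Proof.
  intros Hs Hab HB.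
  set (g := fun z => f (- z)).
  replace (a - b) with (- b - - a) by ring.
  replace (f b - taylor_poly f n a b) with (g (- b) - taylor_poly g n (- a) (- b)).
  - apply (taylor_remainder_fwd g); [apply smooth1_reflect; auto | lra |].
    intros z Hz. unfold g. rewrite Derive_n_reflect, Rabs_mult, pow_1_abs, Rmult_1_l by auto.
    apply HB; lra.
  - unfold g. rewrite Ropp_involutive. f_equal. unfold taylor_poly. apply sum_eq.
    intros m _. rewrite Derive_n_reflect, Ropp_involutive by auto.
    replace (- b - - a) with ((-1) * (b - a)) by ring. rewrite Rpow_mult_distr.
    assert (Hsq : (-1) ^ m * (-1) ^ m = 1).
    { rewrite <- Rpow_mult_distr. replace (-1 * -1) with 1 by ring. apply pow1. }
    transitivity ((-1) ^ m * (-1) ^ m * ((b - a) ^ m / INR (fact m) * Derive_n f m a)).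
    + field. apply INR_fact_neq_0.
    + rewrite Hsq. ring.
Qed.

Lemma taylor_remainder (f : R -> R) n a b B : smooth1 f -> a <> b ->
  (forall z, Rabs (z - a) <= Rabs (b - a) -> Rabs (Derive_n f (S n) z) <= B) ->
  Rabs (f b - taylor_poly f n a b) <= Rabs (b - a) ^ S n / INR (fact (S n)) * B.
Proof.
  intros Hs Hab HB. destruct (Rlt_or_le a b) as [H|H].
  - rewrite (Rabs_pos_eq (b - a)) by lra. apply taylor_remainder_fwd; auto.
    intros z Hz. apply HB. unfold Rabs; destruct Rcase_abs; destruct Rcase_abs; lra.
  - rewrite (Rabs_left1 (b - a)) by lra. replace (- (b - a)) with (a - b) by ring.
    apply taylor_remainder_bwd; [auto | lra |].
    intros z Hz. apply HB. rewrite (Rabs_left1 (b - a)) by lra.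
    unfold Rabs. destruct Rcase_abs; lra.
Qed.

Lemma mean_value_bound f a b B : smooth1 f -> a <> b ->
  (forall z, Rabs (z - a) <= Rabs (b - a) -> Rabs (Derive_n f 1 z) <= B) ->
  Rabs (f b - f a) <= Rabs (b - a) * B.
Proof.
  intros Hs Hab HB. assert (H := taylor_remainder f 0 a b B Hs Hab HB).
  unfold taylor_poly in H. simpl in H.
  replace (Rabs (b - a) * B) with (Rabs (b - a) * 1 / 1 * B) by field.
  replace (f a) with (1 / 1 * f a) by field. exact H.
Qed.

Lemma forward_diff_error f t tau B : smooth1 f -> 0 < tau ->
  (forall z, t <= z <= t + tau -> Rabs (Derive_n f 2 z) <= B) ->
  Rabs ((f (t + tau) - f t) / tau - Derive_n f 1 t) <= tau / 2 * B.
Proof.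
  intros Hs Ht HB.
  assert (H := taylor_remainder_fwd f 1 t (t + tau) B Hs ltac:(lra) HB).
  rewrite taylor_poly1 in H. replace (t + tau - t) with tau in H by ring.
  replace ((f (t + tau) - f t) / tau - Derive_n f 1 t) with
    ((f (t + tau) - (f t + tau * Derive_n f 1 t)) * / tau) by (field; lra).
  rewrite Rabs_mult, Rabs_inv, (Rabs_pos_eq tau) by lra.
  apply Rle_trans with (tau ^ 2 / 2 * B * / tau).
  - apply Rmult_le_compat_r; [left; apply Rinv_0_lt_compat; lra |]. simpl in H |- *. lra.
  - right. field. lra.
Qed.

Lemma central_diff_error f x h B : smooth1 f -> 0 < h ->
  (forall z, Rabs (z - x) <= h -> Rabs (Derive_n f 3 z) <= B) ->
  Rabs ((f (x + h) - f (x - h)) / (2 * h) - Derive_n f 1 x) <= h ^ 2 / 6 * B.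
Proof.
  intros Hs Hh HB.
  assert (H1 := taylor_remainder f 2 x (x + h) B Hs ltac:(lra)).
  assert (H2 := taylor_remainder f 2 x (x - h) B Hs ltac:(lra)).
  replace (x + h - x) with h in H1 by ring. replace (x - h - x) with (- h) in H2 by ring.
  rewrite Rabs_Ropp in H2. rewrite (Rabs_pos_eq h) in H1, H2 by lra.
  specialize (H1 HB). specialize (H2 HB).
  rewrite taylor_poly2 in H1, H2. simpl fact in H1, H2. simpl INR in H1, H2.
  replace ((f (x + h) - f (x - h)) / (2 * h) - Derive_n f 1 x) with
    (((f (x + h) - (f x + (x + h - x) * Derive_n f 1 x + (x + h - x) ^ 2 / 2 * Derive_n f 2 x))
     - (f (x - h) - (f x + (x - h - x) * Derive_n f 1 x + (x - h - x) ^ 2 / 2 * Derive_n f 2 x)))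
     / (2 * h)) by (field; lra).
  unfold Rdiv at 1. rewrite Rabs_mult, Rabs_inv, (Rabs_pos_eq (2 * h)) by lra.
  apply Rle_trans with ((h ^ 3 / 6 * B + h ^ 3 / 6 * B) * / (2 * h)).
  - apply Rmult_le_compat_r; [left; apply Rinv_0_lt_compat; lra |].
    eapply Rle_trans; [apply Rabs_triang |]. rewrite Rabs_Ropp. lra.
  - right. field. lra.
Qed.

Lemma third_diff_error f x h B : smooth1 f -> 0 < h ->
  (forall z, Rabs (z - x) <= 2 * h -> Rabs (Derive_n f 5 z) <= B) ->
  Rabs ((f (x + 2 * h) - 2 * f (x + h) + 2 * f (x - h) - f (x - 2 * h)) / (2 * h ^ 3)
        - Derive_n f 3 x) <= h ^ 2 * B.
Proof.
  intros Hs Hh HB.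
  assert (HB0 : 0 <= B).
  { eapply Rle_trans; [apply Rabs_pos | apply HB]. rewrite Rminus_eq_0, Rabs_R0; lra. }
  assert (G : forall s, 0 < Rabs s <= 2 * h ->
            Rabs (f (x + s) - taylor_poly f 4 x (x + s)) <= Rabs s ^ 5 / 120 * B).
  { intros s Hsb. assert (H := taylor_remainder f 4 x (x + s) B Hs).
    replace (x + s - x) with s in H by ring.
    replace 120 with (INR (fact 5)) by (simpl; ring).
    apply H.
    - intros E. assert (s = 0) by lra. subst s. rewrite Rabs_R0 in Hsb. lra.
    - intros z Hz. apply HB. lra. }
  assert (H1 := G h). assert (H2 := G (2 * h)).
  assert (H3 := G (- h)). assert (H4 := G (- (2 * h))).
  rewrite Rabs_Ropp in H3, H4.
  rewrite (Rabs_pos_eq h) in H1, H3 by lra. rewrite (Rabs_pos_eq (2 * h)) in H2, H4 by lra.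
  specialize (H1 ltac:(lra)). specialize (H2 ltac:(lra)).
  specialize (H3 ltac:(lra)). specialize (H4 ltac:(lra)).
  rewrite taylor_poly4 in H1, H2, H3, H4.
  replace (x + - h) with (x - h) in H3 by ring.
  replace (x + - (2 * h)) with (x - 2 * h) in H4 by ring.
  set (r1 := f (x + h) - _) in H1. set (r2 := f (x + 2 * h) - _) in H2.
  set (r3 := f (x - h) - _) in H3. set (r4 := f (x - 2 * h) - _) in H4.
  replace ((f (x + 2 * h) - 2 * f (x + h) + 2 * f (x - h) - f (x - 2 * h)) / (2 * h ^ 3)
           - Derive_n f 3 x)
    with ((r2 - 2 * r1 + 2 * r3 - r4) / (2 * h ^ 3)) by (unfold r1, r2, r3, r4; field; lra).
  assert (Hh3 : 0 < 2 * h ^ 3) by (assert (0 < h ^ 3) by (apply pow_lt; lra); lra).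
  unfold Rdiv at 1. rewrite Rabs_mult, Rabs_inv, (Rabs_pos_eq (2 * h ^ 3)) by lra.
  assert (Hn : Rabs (r2 - 2 * r1 + 2 * r3 - r4) <= Rabs r2 + 2 * Rabs r1 + 2 * Rabs r3 + Rabs r4).
  { unfold Rabs. repeat destruct Rcase_abs; lra. }
  apply Rle_trans with ((68 * h ^ 5 / 120 * B) * / (2 * h ^ 3)).
  - apply Rmult_le_compat_r; [left; apply Rinv_0_lt_compat; lra |].
    replace ((2 * h) ^ 5) with (32 * h ^ 5) in H2, H4 by ring. lra.
  - replace (68 * h ^ 5 / 120 * B * / (2 * h ^ 3)) with (68 / 240 * (h ^ 2 * B)) by (field; lra).
    assert (0 <= h ^ 2 * B) by (apply Rmult_le_pos; [apply pow_le; lra | lra]). lra.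
Qed.

(** * Sums over the integers *)

Fixpoint symsum (f : Z -> R) (N : nat) : R :=
  match N with
  | O => f 0%Z
  | S N' => symsum f N' + f (Z.of_nat (S N')) + f (- Z.of_nat (S N'))%Z
  end.

Lemma symsum_ext f g N : (forall i, f i = g i) -> symsum f N = symsum g N.
Proof. intros H; induction N; cbn [symsum]; rewrite ?IHN, !H; auto. Qed.

Lemma symsum_plus f g N : symsum (fun i => f i + g i) N = symsum f N + symsum g N.
Proof. induction N; cbn [symsum]; [| rewrite IHN]; ring. Qed.

Lemma symsum_scal a f N : symsum (fun i => a * f i) N = a * symsum f N.
Proof. induction N; cbn [symsum]; [| rewrite IHN]; ring. Qed.

Lemma symsum_le f g N : (forall i, f i <= g i) -> symsum f N <= symsum g N.
Proof.
  intros H; induction N; cbn [symsum]; [apply H |].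
  pose proof (H (Z.of_nat (S N))); pose proof (H (- Z.of_nat (S N))%Z); lra.
Qed.

Section Nonneg.
Variable f : Z -> R.
Hypothesis f_ge0 : forall i, 0 <= f i.

Lemma symsum_ge0 N : 0 <= symsum f N.
Proof.
  induction N; cbn [symsum]; [apply f_ge0 |].
  pose proof (f_ge0 (Z.of_nat (S N))); pose proof (f_ge0 (- Z.of_nat (S N))%Z); lra.
Qed.

Lemma symsum_le_S N : symsum f N <= symsum f (S N).
Proof.
  cbn [symsum]. pose proof (f_ge0 (Z.of_nat (S N))); pose proof (f_ge0 (- Z.of_nat (S N))%Z); lra.
Qed.

Lemma symsum_le_add N k : symsum f N <= symsum f (k + N).
Proof.
  induction k; [simpl; lra |].
  eapply Rle_trans; [apply IHk | apply symsum_le_S].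
Qed.

Lemma term_le_symsum i : f i <= symsum f (Z.abs_nat i).
Proof.
  assert (H0 : forall N, f 0%Z <= symsum f N).
  { induction N; cbn [symsum]; [lra |].
    pose proof (f_ge0 (Z.of_nat (S N))); pose proof (f_ge0 (- Z.of_nat (S N))%Z); lra. }
  destruct i as [|p|p]; simpl Z.abs_nat; [apply Rle_refl | |];
    destruct (Pos2Nat.is_succ p) as [n Hn]; rewrite Hn; cbn [symsum];
    pose proof (H0 n); pose proof (f_ge0 (Z.of_nat (S n)));
    pose proof (f_ge0 (- Z.of_nat (S n))%Z); pose proof (f_ge0 0%Z).
  - replace (Z.pos p) with (Z.of_nat (S n)) by lia. lra.
  - replace (Z.neg p) with (- Z.of_nat (S n))%Z by lia. lra.
Qed.

End Nonneg.

Lemma symsum_succ f N :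
  symsum (fun i => f (i + 1)%Z) N = symsum f N + f (Z.of_nat (S N)) - f (- Z.of_nat N)%Z.
Proof.
  induction N; [simpl; ring |].
  cbn [symsum]. rewrite IHN. cbn [symsum].
  replace (Z.of_nat (S N) + 1)%Z with (Z.of_nat (S (S N))) by lia.
  replace (- Z.of_nat (S N) + 1)%Z with (- Z.of_nat N)%Z by lia.
  ring.
Qed.

Lemma sum_f_R0_symsum f N :
  sum_f_R0 (fun n => f (Z.of_nat n - Z.of_nat N)%Z) (2 * N) = symsum f N.
Proof.
  induction N; [reflexivity |].
  replace (2 * S N)%nat with (S (S (2 * N))) by lia.
  rewrite (decomp_sum _ (S (S (2 * N)))) by lia. cbn [pred].
  rewrite (sum_eq (fun n => f (Z.of_nat (S n) - Z.of_nat (S N))%Z)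
                  (fun n => f (Z.of_nat n - Z.of_nat N)%Z)) by (intros; f_equal; lia).
  cbn [sum_f_R0]. rewrite IHN. cbn [symsum].
  replace (Z.of_nat 0 - Z.of_nat (S N))%Z with (- Z.of_nat (S N))%Z by lia.
  replace (Z.of_nat (S (2 * N)) - Z.of_nat N)%Z with (Z.of_nat (S N)) by lia.
  ring.
Qed.

Definition zsummable (f : Z -> R) : Prop :=
  exists B, forall N, symsum (fun i => Rabs (f i)) N <= B.

Definition zsum (f : Z -> R) : R := real (Lim_seq (symsum f)).

Definition l2 (f : Z -> R) : Prop := zsummable (fun i => f i ^ 2).

Lemma zsummable_le f g : zsummable g -> (forall i, Rabs (f i) <= Rabs (g i)) -> zsummable f.
Proof.
  intros [B HB] H. exists B. intros N.
  eapply Rle_trans; [apply (symsum_le _ (fun i => Rabs (g i))); auto | apply HB].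
Qed.

Lemma zsummable_ext f g : (forall i, f i = g i) -> zsummable f -> zsummable g.
Proof. intros H Hf. apply (zsummable_le g f Hf). intros i; rewrite H; lra. Qed.

Lemma zsummable0 : zsummable (fun _ => 0).
Proof.
  exists 0. intros N. rewrite (symsum_ext _ (fun i => 0 * 0)), symsum_scal; [lra |].
  intros; rewrite Rabs_R0; ring.
Qed.

Lemma zsummable_plus f g : zsummable f -> zsummable g -> zsummable (fun i => f i + g i).
Proof.
  intros [B1 H1] [B2 H2]. exists (B1 + B2). intros N.
  eapply Rle_trans;
    [apply (symsum_le _ (fun i => Rabs (f i) + Rabs (g i))); intros; apply Rabs_triang |].
  rewrite symsum_plus. pose proof (H1 N); pose proof (H2 N); lra.
Qed.

Lemma zsummable_scal a f : zsummable f -> zsummable (fun i => a * f i).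
Proof.
  intros [B H]. exists (Rabs a * B). intros N.
  rewrite (symsum_ext _ (fun i => Rabs a * Rabs (f i))) by (intros; apply Rabs_mult).
  rewrite symsum_scal. apply Rmult_le_compat_l; auto. apply Rabs_pos.
Qed.

Lemma zsummable_lin5 k1 k2 k3 k4 k5 f1 f2 f3 f4 f5 :
  zsummable f1 -> zsummable f2 -> zsummable f3 -> zsummable f4 -> zsummable f5 ->
  zsummable (fun i => k1 * f1 i + k2 * f2 i + k3 * f3 i + k4 * f4 i + k5 * f5 i).
Proof. intros. repeat apply zsummable_plus; apply zsummable_scal; auto. Qed.

Lemma zsummable_bounded_mul b f M :
  (forall i, Rabs (b i) <= M) -> zsummable f -> zsummable (fun i => b i * f i).
Proof.
  intros Hb Hf. apply (zsummable_le _ (fun i => M * f i)); [apply zsummable_scal; auto |].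
  intros i. rewrite !Rabs_mult. apply Rmult_le_compat_r; [apply Rabs_pos |].
  eapply Rle_trans; [apply Hb | apply Rle_abs].
Qed.

Lemma zsummable_mul a b : l2 a -> l2 b -> zsummable (fun i => a i * b i).
Proof.
  intros Ha Hb. apply (zsummable_le _ (fun i => a i ^ 2 + b i ^ 2)); [apply zsummable_plus; auto |].
  intros i. pose proof (pow2_ge_0 (a i)); pose proof (pow2_ge_0 (b i)).
  rewrite (Rabs_pos_eq (a i ^ 2 + b i ^ 2)), Rabs_mult by lra.
  rewrite <- (pow2_abs (a i)), <- (pow2_abs (b i)).
  pose proof (pow2_ge_0 (Rabs (a i) - Rabs (b i))). nra.
Qed.

Lemma zsummable_succ f : zsummable f -> zsummable (fun i => f (i + 1)%Z).
Proof.
  intros [B H]. exists B. intros N. rewrite (symsum_succ (fun i => Rabs (f i))).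
  eapply Rle_trans; [| apply (H (S N))]. cbn [symsum].
  pose proof (Rabs_pos (f (- Z.of_nat N)%Z)); pose proof (Rabs_pos (f (- Z.of_nat (S N))%Z)). lra.
Qed.

Lemma zsummable_pred f : zsummable f -> zsummable (fun i => f (i - 1)%Z).
Proof.
  intros [B H]. exists (B + B). intros N.
  assert (E := symsum_succ (fun i => Rabs (f (i - 1)%Z)) N).
  rewrite (symsum_ext (fun i => Rabs (f (i + 1 - 1)%Z)) (fun i => Rabs (f i))) in E
    by (intros; do 3 f_equal; lia).
  pose proof (Rabs_pos (f (Z.of_nat (S N) - 1)%Z)). pose proof (H N).
  assert (Rabs (f (- Z.of_nat N - 1)%Z) <= B).
  { eapply Rle_trans; [| apply (H (S N))]. cbn [symsum].
    replace (- Z.of_nat N - 1)%Z with (- Z.of_nat (S N))%Z by lia.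
    pose proof (symsum_ge0 (fun i => Rabs (f i)) (fun i => Rabs_pos _) N).
    pose proof (Rabs_pos (f (Z.of_nat (S N)))). lra. }
  lra.
Qed.

Lemma zsummable_shift f k : zsummable f -> zsummable (fun i => f (i + k)%Z).
Proof.
  intros Hf.
  assert (Hn : forall n, zsummable (fun i => f (i + Z.of_nat n)%Z) /\
                         zsummable (fun i => f (i - Z.of_nat n)%Z)).
  { induction n as [|n [IHp IHm]]; split.
    - apply (zsummable_ext f); [intros; f_equal; lia | exact Hf].
    - apply (zsummable_ext f); [intros; f_equal; lia | exact Hf].
    - apply (zsummable_ext (fun i => f (i + 1 + Z.of_nat n)%Z)); [intros; f_equal; lia |].
      exact (zsummable_succ _ IHp).
    - apply (zsummable_ext (fun i => f (i - 1 - Z.of_nat n)%Z)); [intros; f_equal; lia |].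
      exact (zsummable_pred _ IHm). }
  destruct (Z.le_gt_cases 0 k).
  - apply (zsummable_ext (fun i => f (i + Z.of_nat (Z.to_nat k))%Z)); [intros; f_equal; lia |].
    apply Hn.
  - apply (zsummable_ext (fun i => f (i - Z.of_nat (Z.to_nat (- k)))%Z)); [intros; f_equal; lia |].
    apply Hn.
Qed.

Lemma is_lim_seq_zsum f : zsummable f -> is_lim_seq (symsum f) (zsum f).
Proof.
  intros [B HB].
  assert (Habs : ex_finite_lim_seq (symsum (fun i => Rabs (f i)))).
  { apply (ex_finite_lim_seq_incr _ B); auto. intros n; apply symsum_le_S; intros; apply Rabs_pos. }
  assert (Hpos : ex_finite_lim_seq (symsum (fun i => Rabs (f i) + f i))).
  { apply (ex_finite_lim_seq_incr _ (2 * B)).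
    - intros n; apply symsum_le_S. intros i.
      pose proof (Rle_abs (- f i)); rewrite Rabs_Ropp in *; lra.
    - intros n. rewrite symsum_plus. pose proof (HB n).
      assert (symsum f n <= symsum (fun i => Rabs (f i)) n)
        by (apply symsum_le; intros; apply Rle_abs).
      lra. }
  destruct Habs as [l1 H1], Hpos as [l2 H2].
  assert (H : is_lim_seq (symsum f) (l2 - l1)).
  { apply (is_lim_seq_ext
      (fun n => symsum (fun i => Rabs (f i) + f i) n - symsum (fun i => Rabs (f i)) n)).
    - intros n. rewrite symsum_plus. ring.
    - eapply is_lim_seq_minus; eauto. reflexivity. }
  unfold zsum. rewrite (is_lim_seq_unique _ _ H). exact H.
Qed.

Lemma zsum_unique f (l : R) : is_lim_seq (symsum f) l -> zsum f = l.
Proof. intros H. unfold zsum. rewrite (is_lim_seq_unique _ _ H). reflexivity. Qed.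

Lemma zsum_ext f g : (forall i, f i = g i) -> zsum f = zsum g.
Proof. intros H. unfold zsum. f_equal. apply Lim_seq_ext. intros; apply symsum_ext; auto. Qed.

Lemma zsum_le f g : zsummable f -> zsummable g -> (forall i, f i <= g i) -> zsum f <= zsum g.
Proof.
  intros Hf Hg H.
  exact (is_lim_seq_le _ _ _ _ (fun n => symsum_le f g n H)
           (is_lim_seq_zsum f Hf) (is_lim_seq_zsum g Hg)).
Qed.

Lemma zsum_le_bound f B : zsummable f -> (forall N, symsum f N <= B) -> zsum f <= B.
Proof.
  intros Hf H. exact (is_lim_seq_le _ _ _ _ H (is_lim_seq_zsum f Hf) (is_lim_seq_const B)).
Qed.

Lemma term_le_zsum f i : zsummable f -> (forall i, 0 <= f i) -> f i <= zsum f.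
Proof.
  intros Hf H. set (N := Z.abs_nat i).
  assert (Htail : is_lim_seq (fun n => symsum f (n + N)) (zsum f))
    by exact (proj1 (is_lim_seq_incr_n (symsum f) N _) (is_lim_seq_zsum f Hf)).
  eapply Rle_trans; [apply term_le_symsum; auto |].
  exact (is_lim_seq_le _ _ _ _ (fun n => symsum_le_add f H N n) (is_lim_seq_const _) Htail).
Qed.

Lemma abs_le_of_zsum_sq_le f a : l2 f -> 0 <= a -> zsum (fun i => f i ^ 2) <= a ^ 2 ->
  forall k, Rabs (f k) <= a.
Proof.
  intros Hl2 Ha Hsum k. apply Rnot_lt_le. intros Hlt.
  assert (a ^ 2 < f k ^ 2).
  { rewrite <- (pow2_abs (f k)).
    replace (Rabs (f k) ^ 2) with (a ^ 2 + (Rabs (f k) - a) * (Rabs (f k) + a)) by ring.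
    assert (0 < (Rabs (f k) - a) * (Rabs (f k) + a)) by (apply Rmult_lt_0_compat; lra).
    lra. }
  pose proof (term_le_zsum (fun i => f i ^ 2) k Hl2 (fun i => pow2_ge_0 (f i))). lra.
Qed.

Lemma zsum_plus f g : zsummable f -> zsummable g -> zsum (fun i => f i + g i) = zsum f + zsum g.
Proof.
  intros Hf Hg. apply zsum_unique.
  apply (is_lim_seq_ext (fun n => symsum f n + symsum g n)); [intros; rewrite symsum_plus; auto |].
  eapply is_lim_seq_plus; [apply is_lim_seq_zsum; auto | apply is_lim_seq_zsum; auto | reflexivity].
Qed.

Lemma zsum_scal a f : zsummable f -> zsum (fun i => a * f i) = a * zsum f.
Proof.
  intros Hf. apply zsum_unique.
  apply (is_lim_seq_ext (fun n => a * symsum f n)); [intros; rewrite symsum_scal; auto |].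
  exact (is_lim_seq_scal_l _ a _ (is_lim_seq_zsum f Hf)).
Qed.

Lemma zsum0 : zsum (fun _ => 0) = 0.
Proof.
  rewrite (zsum_ext _ (fun i => 0 * 0)), (zsum_scal 0 (fun _ => 0))
    by (exact zsummable0 || intros; ring).
  ring.
Qed.

Lemma zsum_lin5 k1 k2 k3 k4 k5 f1 f2 f3 f4 f5 :
  zsummable f1 -> zsummable f2 -> zsummable f3 -> zsummable f4 -> zsummable f5 ->
  zsum (fun i => k1 * f1 i + k2 * f2 i + k3 * f3 i + k4 * f4 i + k5 * f5 i)
  = k1 * zsum f1 + k2 * zsum f2 + k3 * zsum f3 + k4 * zsum f4 + k5 * zsum f5.
Proof.
  intros H1 H2 H3 H4 H5.
  assert (S1 := zsummable_scal k1 f1 H1). assert (S2 := zsummable_scal k2 f2 H2).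
  assert (S3 := zsummable_scal k3 f3 H3). assert (S4 := zsummable_scal k4 f4 H4).
  assert (S5 := zsummable_scal k5 f5 H5).
  rewrite (zsum_plus (fun i => k1 * f1 i + k2 * f2 i + k3 * f3 i + k4 * f4 i) (fun i => k5 * f5 i)),
    (zsum_plus (fun i => k1 * f1 i + k2 * f2 i + k3 * f3 i) (fun i => k4 * f4 i)),
    (zsum_plus (fun i => k1 * f1 i + k2 * f2 i) (fun i => k3 * f3 i)),
    (zsum_plus (fun i => k1 * f1 i) (fun i => k2 * f2 i))
    by (repeat apply zsummable_plus; auto).
  rewrite !zsum_scal; auto.
Qed.

Lemma zsummable_tails f : zsummable f ->
  is_lim_seq (fun n => f (Z.of_nat n)) 0 /\ is_lim_seq (fun n => f (- Z.of_nat n)%Z) 0.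
Proof.
  intros Hf. assert (Ha : zsummable (fun i => Rabs (f i))).
  { apply (zsummable_le _ f Hf). intros; rewrite Rabs_Rabsolu; lra. }
  set (A := symsum (fun i => Rabs (f i))).
  assert (D : is_lim_seq (fun n => A (S n) - A n) 0).
  { replace (Finite 0) with (Rbar_minus (zsum (fun i => Rabs (f i))) (zsum (fun i => Rabs (f i))))
      by (simpl; f_equal; ring).
    apply is_lim_seq_minus'; [apply (is_lim_seq_incr_1 A) |]; apply is_lim_seq_zsum; auto. }
  split; apply is_lim_seq_incr_1, is_lim_seq_abs_0;
    apply (is_lim_seq_le_le (fun _ => 0) _ _ 0) with (3 := D); try apply is_lim_seq_const;
    intros n; unfold A; cbn [symsum]; split; try apply Rabs_pos;
    pose proof (Rabs_pos (f (- Z.of_nat (S n))%Z)); pose proof (Rabs_pos (f (Z.of_nat (S n)))); lra.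
Qed.

Lemma zsum_succ f : zsummable f -> zsum (fun i => f (i + 1)%Z) = zsum f.
Proof.
  intros Hf. destruct (zsummable_tails f Hf) as [T1 T2]. apply zsum_unique.
  apply (is_lim_seq_ext (fun n => symsum f n + f (Z.of_nat (S n)) - f (- Z.of_nat n)%Z));
    [intros; rewrite symsum_succ; auto |].
  replace (Finite (zsum f)) with (Rbar_minus (Rbar_plus (zsum f) 0) 0) by (simpl; f_equal; ring).
  apply is_lim_seq_minus'; auto. apply is_lim_seq_plus'; [apply is_lim_seq_zsum; auto |].
  apply (is_lim_seq_incr_1 (fun n => f (Z.of_nat n))). auto.
Qed.

Lemma zsum_pred f : zsummable f -> zsum (fun i => f (i - 1)%Z) = zsum f.
Proof.
  intros Hf. rewrite <- (zsum_succ (fun i => f (i - 1)%Z)) by (apply zsummable_pred; auto).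
  apply zsum_ext. intros; f_equal; lia.
Qed.

Lemma zsum_shift f k : zsummable f -> zsum (fun i => f (i + k)%Z) = zsum f.
Proof.
  intros Hf.
  assert (Hn : forall n, zsum (fun i => f (i + Z.of_nat n)%Z) = zsum f /\
                         zsum (fun i => f (i - Z.of_nat n)%Z) = zsum f).
  { induction n as [|n [IHp IHm]]; split.
    - apply zsum_ext. intros; f_equal; lia.
    - apply zsum_ext. intros; f_equal; lia.
    - rewrite <- IHp, <- (zsum_succ (fun i => f (i + Z.of_nat n)%Z))
        by (apply zsummable_shift; auto).
      apply zsum_ext. intros; f_equal; lia.
    - rewrite <- IHm, <- (zsum_pred (fun i => f (i - Z.of_nat n)%Z))
        by (apply (zsummable_shift f (- Z.of_nat n)); auto).
      apply zsum_ext. intros; f_equal; lia. }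
  destruct (Z.le_gt_cases 0 k).
  - rewrite <- (proj1 (Hn (Z.to_nat k))). apply zsum_ext. intros; f_equal; lia.
  - rewrite <- (proj2 (Hn (Z.to_nat (- k)))). apply zsum_ext. intros; f_equal; lia.
Qed.

Lemma pow_le_pow_le1 x m n : 0 <= x <= 1 -> (m <= n)%nat -> x ^ n <= x ^ m.
Proof.
  intros Hx Hmn. replace n with (m + (n - m))%nat by lia. rewrite pow_add.
  assert (x ^ (n - m) <= 1) by (rewrite <- (pow1 (n - m)); apply pow_incr; lra).
  assert (0 <= x ^ m) by (apply pow_le; lra). assert (0 <= x ^ (n - m)) by (apply pow_le; lra).
  nra.
Qed.

Lemma sq_sum4_le a b c d : (a + b + c + d) ^ 2 <= 4 * (a ^ 2 + b ^ 2 + c ^ 2 + d ^ 2).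
Proof.
  assert (0 <= (a-b)^2 + (a-c)^2 + (a-d)^2 + (b-c)^2 + (b-d)^2 + (c-d)^2)
    by (repeat apply Rplus_le_le_0_compat; apply pow2_ge_0).
  nra.
Qed.

Lemma sq_sum5_le a b c d e :
  (a + b + c + d + e) ^ 2 <= 5 * (a ^ 2 + b ^ 2 + c ^ 2 + d ^ 2 + e ^ 2).
Proof.
  assert (0 <= (a-b)^2 + (a-c)^2 + (a-d)^2 + (a-e)^2 + (b-c)^2 + (b-d)^2 + (b-e)^2
               + (c-d)^2 + (c-e)^2 + (d-e)^2)
    by (repeat apply Rplus_le_le_0_compat; apply pow2_ge_0).
  nra.
Qed.

Section DifferenceQuotients.
Variable h : R.
Hypothesis h_gt0 : 0 < h.

Lemma central_quotient_abs_le1 p q :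
  Rabs p <= h -> Rabs q <= h -> Rabs ((p - q) / (2 * h)) <= 1.
Proof.
  intros Hp Hq. unfold Rdiv. rewrite Rabs_mult, Rabs_inv, (Rabs_pos_eq (2 * h)) by lra.
  apply Rmult_le_reg_r with (2 * h); [lra |]. rewrite Rmult_assoc, Rinv_l, Rmult_1_r by lra.
  unfold Rminus. eapply Rle_trans; [apply Rabs_triang |]. rewrite Rabs_Ropp. lra.
Qed.

Hypothesis h_le1 : h <= 1.

Lemma central_quotient_sq_le p q : ((p - q) / (2 * h)) ^ 2 <= (p ^ 2 + q ^ 2) / h ^ 6.
Proof.
  assert (H62 : h ^ 6 <= h ^ 2) by (apply pow_le_pow_le1; lra || lia).
  assert (Hh6 : 0 < h ^ 6) by (apply pow_lt; lra).
  apply Rle_trans with (((p - q) / (2 * h)) ^ 2 + ((p + q) / (2 * h)) ^ 2);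
    [pose proof (pow2_ge_0 ((p + q) / (2 * h))); lra |].
  replace (((p - q) / (2 * h)) ^ 2 + ((p + q) / (2 * h)) ^ 2) with ((p ^ 2 + q ^ 2) / (2 * h ^ 2))
    by (field; lra).
  unfold Rdiv. apply Rmult_le_compat_l; [pose proof (pow2_ge_0 p); pose proof (pow2_ge_0 q); lra |].
  apply Rinv_le_contravar; [exact Hh6 |]. pose proof (pow2_ge_0 h). lra.
Qed.

Lemma third_quotient_sq_le a p q b :
  ((a - 2 * p + 2 * q - b) / (2 * h ^ 3)) ^ 2 <= (a ^ 2 + 4 * p ^ 2 + 4 * q ^ 2 + b ^ 2) / h ^ 6.
Proof.
  assert (Hh3 : 0 < h ^ 3) by (apply pow_lt; lra).
  replace (((a - 2 * p + 2 * q - b) / (2 * h ^ 3)) ^ 2)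
    with ((a + (- 2 * p) + 2 * q + (- b)) ^ 2 / (4 * h ^ 6)) by (field; lra).
  replace ((a ^ 2 + 4 * p ^ 2 + 4 * q ^ 2 + b ^ 2) / h ^ 6)
    with (4 * (a ^ 2 + (- 2 * p) ^ 2 + (2 * q) ^ 2 + (- b) ^ 2) / (4 * h ^ 6)) by (field; lra).
  unfold Rdiv. apply Rmult_le_compat_r; [left; apply Rinv_0_lt_compat; nra |].
  apply sq_sum4_le.
Qed.

End DifferenceQuotients.

Lemma decay_weight_shift x z : Rabs (z - x) <= 2 -> 1 / (1 + z ^ 2) <= 9 / (1 + x ^ 2).
Proof.
  intros H. assert (Hx : 0 < 1 + x ^ 2) by nra. assert (Hz : 0 < 1 + z ^ 2) by nra.
  assert (Ha : (z - x) ^ 2 <= 4) by (rewrite <- pow2_abs; pose proof (Rabs_pos (z - x)); nra).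
  replace (1 / (1 + z ^ 2)) with (9 * / (9 * (1 + z ^ 2))) by (field; lra).
  unfold Rdiv. apply Rmult_le_compat_l; [lra |]. apply Rinv_le_contravar; nra.
Qed.

Lemma symsum_decay_weight_le h N : 0 < h ->
  symsum (fun i => 1 / (1 + (IZR i * h) ^ 2)) N <= 1 + 4 / h * (1 - 1 / (1 + INR N * h)).
Proof.
  intros Hh. induction N.
  - cbn [symsum]. change (INR 0) with 0.
    replace (1 / (1 + (0 * h) ^ 2)) with 1 by field.
    replace (1 / (1 + 0 * h)) with 1 by field. lra.
  - cbn [symsum]. rewrite opp_IZR, <- INR_IZR_INZ.
    replace ((- INR (S N) * h) ^ 2) with ((INR (S N) * h) ^ 2) by ring.
    rewrite S_INR in *. set (n := INR N) in *. assert (Hn : 0 <= n) by apply pos_INR.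
    assert (Ha1 : 0 < 1 + n * h) by nra. assert (Ha2 : 0 < 1 + (n + 1) * h) by nra.
    assert (Hb : 0 < 1 + ((n + 1) * h) ^ 2) by nra.
    assert (Hab : (1 + n * h) * (1 + (n + 1) * h) <= 2 * (1 + ((n + 1) * h) ^ 2)).
    { set (y := (n + 1) * h). assert (1 + n * h <= 1 + y) by (unfold y; nra).
      assert (0 <= (y - 1) ^ 2) by apply pow2_ge_0.
      apply Rle_trans with ((1 + y) * (1 + y)); [apply Rmult_le_compat_r |]; nra. }
    assert (K : 2 * (1 / (1 + ((n + 1) * h) ^ 2))
                <= 4 / h * (1 / (1 + n * h) - 1 / (1 + (n + 1) * h))).
    { replace (4 / h * (1 / (1 + n * h) - 1 / (1 + (n + 1) * h)))
        with (4 / ((1 + n * h) * (1 + (n + 1) * h))) by (field; lra).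
      apply Rmult_le_reg_r with ((1 + n * h) * (1 + (n + 1) * h) * (1 + ((n + 1) * h) ^ 2));
        [apply Rmult_lt_0_compat; [apply Rmult_lt_0_compat |]; lra |].
      replace (2 * (1 / (1 + ((n + 1) * h) ^ 2))
               * ((1 + n * h) * (1 + (n + 1) * h) * (1 + ((n + 1) * h) ^ 2)))
        with (2 * ((1 + n * h) * (1 + (n + 1) * h))) by (field; lra).
      replace (4 / ((1 + n * h) * (1 + (n + 1) * h))
               * ((1 + n * h) * (1 + (n + 1) * h) * (1 + ((n + 1) * h) ^ 2)))
        with (4 * (1 + ((n + 1) * h) ^ 2)) by (field; lra).
      lra. }
    lra.
Qed.

Lemma symsum_decay_weight_bound h N : 0 < h ->
  symsum (fun i => 1 / (1 + (IZR i * h) ^ 2)) N <= 1 + 4 / h.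
Proof.
  intros Hh. eapply Rle_trans; [apply symsum_decay_weight_le; auto |].
  assert (0 < 1 + INR N * h) by (pose proof (pos_INR N); nra).
  assert (0 <= 1 / (1 + INR N * h)) by (apply Rdiv_le_0_compat; lra).
  assert (0 < 4 / h) by (apply Rdiv_lt_0_compat; lra). nra.
Qed.

Lemma operator_sq_le c eps g e0 C E v X1 X3 Y T :
  Rabs eps <= e0 -> Rabs v <= C -> Rabs Y <= C ->
  X1 ^ 2 <= T -> X1 ^ 2 <= 1 -> X3 ^ 2 <= 4 * T -> E ^ 2 <= T ->
  (c * X1 + eps * X3 + g * (E * X1 + v * X1 + E * Y)) ^ 2
  <= 5 * (c ^ 2 + 4 * e0 ^ 2 + g ^ 2 + 2 * g ^ 2 * C ^ 2) * T.
Proof.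
  intros Heps Hv HY HX1 HX1' HX3 HE2.
  assert (He2 := pow_maj_Rabs _ _ 2 Heps). assert (Hv2 := pow_maj_Rabs _ _ 2 Hv).
  assert (HY2 := pow_maj_Rabs _ _ 2 HY).
  pose proof (pow2_ge_0 c); pose proof (pow2_ge_0 g); pose proof (pow2_ge_0 e0);
    pose proof (pow2_ge_0 C); pose proof (pow2_ge_0 X1); pose proof (pow2_ge_0 X3);
    pose proof (pow2_ge_0 v); pose proof (pow2_ge_0 Y); pose proof (pow2_ge_0 eps);
    pose proof (pow2_ge_0 E).
  assert (HT : 0 <= T) by lra.
  assert (T1 : (c * X1) ^ 2 <= c ^ 2 * T)
    by (rewrite Rpow_mult_distr; apply Rmult_le_compat_l; auto).
  assert (T2 : (eps * X3) ^ 2 <= e0 ^ 2 * (4 * T))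
    by (rewrite Rpow_mult_distr; apply Rmult_le_compat; auto).
  assert (T3 : (g * E * X1) ^ 2 <= g ^ 2 * T).
  { rewrite !Rpow_mult_distr, Rmult_assoc. apply Rmult_le_compat_l; auto.
    apply Rle_trans with (E ^ 2 * 1); [apply Rmult_le_compat_l |]; lra. }
  assert (T4 : (g * v * X1) ^ 2 <= g ^ 2 * C ^ 2 * T).
  { rewrite !Rpow_mult_distr, !Rmult_assoc. apply Rmult_le_compat_l; auto.
    apply Rmult_le_compat; auto. }
  assert (T5 : (g * E * Y) ^ 2 <= g ^ 2 * C ^ 2 * T).
  { rewrite !Rpow_mult_distr, !Rmult_assoc. apply Rmult_le_compat_l; auto.
    rewrite Rmult_comm. apply Rmult_le_compat; auto. }
  replace (c * X1 + eps * X3 + g * (E * X1 + v * X1 + E * Y))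
    with (c * X1 + eps * X3 + g * E * X1 + g * v * X1 + g * E * Y) by ring.
  eapply Rle_trans; [apply sq_sum5_le | lra].
Qed.

Lemma scheme_operator_sq_le c eps g e0 C h E v p q a b Y :
  0 < h -> h <= 1 -> Rabs eps <= e0 -> Rabs v <= C -> Rabs Y <= C ->
  Rabs E <= h -> Rabs p <= h -> Rabs q <= h ->
  (c * ((p - q) / (2 * h)) + eps * ((a - 2 * p + 2 * q - b) / (2 * h ^ 3))
    + g * (E * ((p - q) / (2 * h)) + v * ((p - q) / (2 * h)) + E * Y)) ^ 2
  <= 5 * (c ^ 2 + 4 * e0 ^ 2 + g ^ 2 + 2 * g ^ 2 * C ^ 2) / h ^ 6
       * (a ^ 2 + p ^ 2 + E ^ 2 + q ^ 2 + b ^ 2).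
Proof.
  intros Hh Hh1 Heps Hv HY HE Hp Hq.
  set (S := a ^ 2 + p ^ 2 + E ^ 2 + q ^ 2 + b ^ 2).
  assert (Hh6 : 0 < h ^ 6) by (apply pow_lt; lra).
  assert (Hh61 : h ^ 6 <= 1) by (rewrite <- (pow1 6); apply pow_incr; lra).
  pose proof (pow2_ge_0 a); pose proof (pow2_ge_0 p); pose proof (pow2_ge_0 E);
    pose proof (pow2_ge_0 q); pose proof (pow2_ge_0 b).
  assert (Hinv : 0 < / h ^ 6) by (apply Rinv_0_lt_compat; lra).
  assert (HST : S <= S / h ^ 6).
  { unfold Rdiv. rewrite <- (Rmult_1_r S) at 1. apply Rmult_le_compat_l; [unfold S; lra |].
    rewrite <- Rinv_1. apply Rinv_le_contravar; lra. }
  replace (5 * (c ^ 2 + 4 * e0 ^ 2 + g ^ 2 + 2 * g ^ 2 * C ^ 2) / h ^ 6 * S)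
    with (5 * (c ^ 2 + 4 * e0 ^ 2 + g ^ 2 + 2 * g ^ 2 * C ^ 2) * (S / h ^ 6)) by (field; lra).
  apply operator_sq_le; auto.
  - eapply Rle_trans; [apply central_quotient_sq_le; auto |].
    unfold Rdiv. apply Rmult_le_compat_r; [lra | unfold S; lra].
  - rewrite <- (pow1 2). apply pow_maj_Rabs, central_quotient_abs_le1; auto.
  - eapply Rle_trans; [apply third_quotient_sq_le; auto |].
    unfold Rdiv. rewrite <- Rmult_assoc. apply Rmult_le_compat_r; [lra | unfold S; lra].
  - unfold S in HST |- *. lra.
Qed.

Lemma nonlinear_remainder_le g C h w w' q E X Y :
  0 < h -> Rabs (w - w') <= h * C -> Rabs X <= 1 -> Rabs Y <= C ->
  Rabs (g * (w - w') * q * E / (2 * h) + g * E ^ 2 * X + g * E ^ 2 * Y)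
  <= Rabs g * (1 + 2 * C) * (q ^ 2 + E ^ 2).
Proof.
  intros Hh Hw HX HY.
  assert (HC : 0 <= C) by (pose proof (Rabs_pos Y); lra).
  assert (Hg := Rabs_pos g). assert (HE := pow2_ge_0 E). assert (Hq := pow2_ge_0 q).
  assert (Hqe : Rabs (q * E) <= (q ^ 2 + E ^ 2) / 2).
  { rewrite Rabs_mult, <- (pow2_abs q), <- (pow2_abs E).
    pose proof (pow2_ge_0 (Rabs q - Rabs E)). nra. }
  assert (Hd : Rabs ((w - w') / h) <= C).
  { unfold Rdiv. rewrite Rabs_mult, Rabs_inv, (Rabs_pos_eq h) by lra.
    apply Rmult_le_reg_r with h; [lra |]. rewrite Rmult_assoc, Rinv_l, Rmult_1_r by lra. lra. }
  assert (R1 : Rabs (g * (w - w') * q * E / (2 * h)) <= Rabs g * C * ((q ^ 2 + E ^ 2) / 2) / 2).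
  { replace (g * (w - w') * q * E / (2 * h)) with (g * ((w - w') / h) * (q * E) * / 2)
      by (field; lra).
    set (qe := q * E) in *. set (dw := (w - w') / h) in *.
    rewrite !Rabs_mult, (Rabs_pos_eq (/ 2)) by lra. unfold Rdiv.
    apply Rmult_le_compat_r; [lra |].
    apply Rmult_le_compat; [apply Rmult_le_pos; apply Rabs_pos | apply Rabs_pos | | auto].
    apply Rmult_le_compat_l; auto. }
  assert (R2 : Rabs (g * E ^ 2 * X) <= Rabs g * E ^ 2).
  { rewrite !Rabs_mult, (Rabs_pos_eq (E ^ 2)) by auto.
    rewrite <- (Rmult_1_r (Rabs g * E ^ 2)) at 2.
    apply Rmult_le_compat_l; auto. apply Rmult_le_pos; auto. }
  assert (R3 : Rabs (g * E ^ 2 * Y) <= Rabs g * E ^ 2 * C).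
  { rewrite !Rabs_mult, (Rabs_pos_eq (E ^ 2)) by auto.
    apply Rmult_le_compat_l; auto. apply Rmult_le_pos; auto. }
  eapply Rle_trans; [apply Rabs_triang |].
  eapply Rle_trans; [apply Rplus_le_compat_r, Rabs_triang |].
  assert (0 <= Rabs g * C * q ^ 2) by (apply Rmult_le_pos; [apply Rmult_le_pos |]; auto).
  assert (0 <= Rabs g * C * E ^ 2) by (apply Rmult_le_pos; [apply Rmult_le_pos |]; auto).
  assert (0 <= Rabs g * q ^ 2) by (apply Rmult_le_pos; auto).
  nra.
Qed.

Lemma perturbed_step_sq_le tau e L r Qd Rs Rb Lb :
  0 < tau -> tau <= 1 -> e * L = Qd + Rs -> Rabs Rs <= Rb -> L ^ 2 <= Lb ->
  (e - tau * L - tau * r) ^ 2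
  <= (1 + tau) * e ^ 2 - 2 * tau * (1 + tau) * Qd + 2 * tau * (1 + tau) * Rb
     + (1 + tau) * tau ^ 2 * Lb + 2 * tau * r ^ 2.
Proof.
  intros Ht Ht1 HeL HR HL. set (a := e - tau * L).
  assert (S1 : (a - tau * r) ^ 2 <= (1 + tau) * a ^ 2 + 2 * tau * r ^ 2).
  { pose proof (pow2_ge_0 (a + r)). assert (0 <= tau * (a + r) ^ 2) by (apply Rmult_le_pos; lra).
    assert (0 <= (tau - tau ^ 2) * r ^ 2) by (apply Rmult_le_pos; [nra | apply pow2_ge_0]). nra. }
  assert (S2 : a ^ 2 <= e ^ 2 - 2 * tau * Qd + 2 * tau * Rb + tau ^ 2 * Lb).
  { unfold a.
    replace ((e - tau * L) ^ 2) with (e ^ 2 - 2 * tau * (e * L) + tau ^ 2 * L ^ 2) by ring.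
    rewrite HeL. assert (- Rs <= Rb) by (pose proof (Rle_abs (- Rs)); rewrite Rabs_Ropp in *; lra).
    assert (tau ^ 2 * L ^ 2 <= tau ^ 2 * Lb) by (apply Rmult_le_compat_l; [apply pow2_ge_0 | auto]).
    nra. }
  replace (e - tau * L - tau * r) with (a - tau * r) by (unfold a; ring).
  eapply Rle_trans; [apply S1 |].
  assert ((1 + tau) * a ^ 2 <= (1 + tau) * (e ^ 2 - 2 * tau * Qd + 2 * tau * Rb + tau ^ 2 * Lb))
    by (apply Rmult_le_compat_l; lra).
  nra.
Qed.

Lemma pow_1plus_le_exp a n T : 0 <= a -> a * INR n <= T -> (1 + a) ^ n <= exp T.
Proof.
  intros Ha HT.
  assert (H : (1 + a) ^ n <= exp (a * INR n)).
  { clear HT. induction n.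
    - simpl. rewrite Rmult_0_r, exp_0. lra.
    - replace (a * INR (S n)) with (a + a * INR n) by (rewrite S_INR; ring).
      rewrite exp_plus. simpl pow.
      apply Rmult_le_compat; [lra | apply pow_le; lra | apply exp_ineq1_le | exact IHn]. }
  destruct (Rle_lt_or_eq_dec _ _ HT) as [Hlt | <-]; [| exact H].
  pose proof (exp_increasing _ _ Hlt). lra.
Qed.

Lemma small_enough a b : 0 <= a -> 0 <= b ->
  exists h0, 0 < h0 /\ forall h, 0 < h -> h < h0 -> h <= 1 /\ a * h <= 1 /\ b * h <= 1.
Proof.
  intros Ha Hb. exists (Rmin 1 (Rmin (1 / (a + 1)) (1 / (b + 1)))).
  split; [apply Rmin_pos; [lra | apply Rmin_pos; apply Rdiv_lt_0_compat; lra] |].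
  intros h Hh Hh0.
  pose proof (Rmin_l 1 (Rmin (1 / (a + 1)) (1 / (b + 1)))).
  pose proof (Rmin_r 1 (Rmin (1 / (a + 1)) (1 / (b + 1)))).
  pose proof (Rmin_l (1 / (a + 1)) (1 / (b + 1))). pose proof (Rmin_r (1 / (a + 1)) (1 / (b + 1))).
  assert (Hx : forall x, 0 <= x -> h < 1 / (x + 1) -> x * h <= 1).
  { intros x Hx Hlt. apply Rmult_lt_compat_l with (r := x + 1) in Hlt; [| lra].
    replace ((x + 1) * (1 / (x + 1))) with 1 in Hlt by (field; lra). nra. }
  repeat split; [lra | apply Hx | apply Hx]; auto; lra.
Qed.

Lemma tau_le_sq K h tau : 0 < h -> h <= 1 -> Rabs K * h <= 1 -> tau <= K * h ^ 6 -> tau <= h ^ 2.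
Proof.
  intros Hh Hh1 HK Htau.
  assert (H52 : h ^ 5 <= h ^ 2) by (apply pow_le_pow_le1; lra || lia).
  assert (0 <= h ^ 5) by (apply pow_le; lra).
  assert (K * h ^ 6 <= Rabs K * h * h ^ 5).
  { replace (Rabs K * h * h ^ 5) with (Rabs K * h ^ 6) by ring.
    apply Rmult_le_compat_r; [apply pow_le; lra | apply Rle_abs]. }
  assert (Rabs K * h * h ^ 5 <= h ^ 5) by (pose proof (Rabs_pos K); nra).
  lra.
Qed.

(** * Consistency and stability of the scheme *)

Lemma Derive_n_dx (theta : R -> R -> R) k x t :
  Derive_n (fun y => theta y t) k x = dx k theta x t.
Proof.
  revert x. induction k as [|k IH]; intros x; [reflexivity |].
  simpl Derive_n. rewrite (Derive_ext _ (fun y => dx k theta y t)) by (intros; apply IH).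
  reflexivity.
Qed.

Lemma Derive_n_dt (theta : R -> R -> R) k x t :
  Derive_n (fun s => theta x s) k t = dt k theta x t.
Proof.
  revert t. induction k as [|k IH]; intros t; [reflexivity |].
  simpl Derive_n. rewrite (Derive_ext _ (fun s => dt k theta x s)) by (intros; apply IH).
  reflexivity.
Qed.

Section Scheme.
Variables (c g d t0 : R) (theta : R -> R -> R) (C : R).
Hypothesis Hsmooth : smooth2 theta.
Hypothesis Hpde : forall x t, 0 <= t <= t0 ->
  dt 1 theta x t + c * dx 1 theta x t + g * theta x t * dx 1 theta x t + d * dx 3 theta x t = 0.
Hypothesis Hdecay_t : forall x t, 0 <= t <= t0 -> Rabs (dt 2 theta x t) <= C / (1 + x ^ 2).
Hypothesis Hdecay_x : forall (k : nat) x t, (k <= 5)%nat -> 0 <= t <= t0 ->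
  Rabs (dx k theta x t) <= C / (1 + x ^ 2).

Lemma smooth1_space t : smooth1 (fun y => theta y t).
Proof.
  intros [|k] x; [exact I |]. change (ex_derive (Derive_n (fun y => theta y t) k) x).
  apply (ex_derive_ext (fun y => dx k theta y t)); [intros; symmetry; apply Derive_n_dx |].
  exact (proj1 (Hsmooth (repeat true k) x t)).
Qed.

Lemma smooth1_time x : smooth1 (fun s => theta x s).
Proof.
  intros [|k] t; [exact I |]. change (ex_derive (Derive_n (fun s => theta x s) k) t).
  apply (ex_derive_ext (fun s => dt k theta x s)); [intros; symmetry; apply Derive_n_dt |].
  exact (proj1 (proj2 (Hsmooth (repeat false k) x t))).
Qed.

Hypothesis t0_ge0 : 0 <= t0.

Lemma C_ge0 : 0 <= C.
Proof.
  assert (H := Hdecay_x 0 0 0 (Nat.le_0_l _) ltac:(lra)).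
  replace (C / (1 + 0 ^ 2)) with C in H by field.
  pose proof (Rabs_pos (dx 0 theta 0 0)). lra.
Qed.

Lemma dx_bounded k z t : (k <= 5)%nat -> 0 <= t <= t0 -> Rabs (dx k theta z t) <= C.
Proof.
  intros Hk Ht. eapply Rle_trans; [apply Hdecay_x; auto |]. pose proof C_ge0.
  unfold Rdiv. rewrite <- (Rmult_1_r C) at 2. apply Rmult_le_compat_l; auto.
  rewrite <- Rinv_1. apply Rinv_le_contravar; nra.
Qed.

Lemma dx_decay_near k x z t : (k <= 5)%nat -> 0 <= t <= t0 -> Rabs (z - x) <= 2 ->
  Rabs (dx k theta z t) <= 9 * (C / (1 + x ^ 2)).
Proof.
  intros Hk Ht Hz. eapply Rle_trans; [apply Hdecay_x; auto |].
  pose proof (decay_weight_shift x z Hz). pose proof C_ge0.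
  replace (C / (1 + z ^ 2)) with (C * (1 / (1 + z ^ 2))) by (field; nra).
  replace (9 * (C / (1 + x ^ 2))) with (C * (9 / (1 + x ^ 2))) by (field; nra).
  apply Rmult_le_compat_l; auto.
Qed.

Definition e_coef_bound : R := Rabs d + Rabs c.
Definition consistency_const : R := C * (1 + 2 * Rabs c + 2 * Rabs g * C + 9 * e_coef_bound).
Definition nonlinear_const : R := Rabs g * (1 + 2 * C).
Definition operator_const : R := 5 * (c ^ 2 + 4 * e_coef_bound ^ 2 + g ^ 2 + 2 * g ^ 2 * C ^ 2).

Lemma e_coef_bound_ge0 : 0 <= e_coef_bound.
Proof. unfold e_coef_bound. pose proof (Rabs_pos c); pose proof (Rabs_pos d). lra. Qed.

Lemma nonlinear_const_ge0 : 0 <= nonlinear_const.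
Proof. unfold nonlinear_const. pose proof C_ge0. apply Rmult_le_pos; [apply Rabs_pos | lra]. Qed.

Lemma operator_const_ge0 : 0 <= operator_const.
Proof.
  unfold operator_const. pose proof (pow2_ge_0 c); pose proof (pow2_ge_0 e_coef_bound);
    pose proof (pow2_ge_0 g); pose proof (Rmult_le_pos _ _ (pow2_ge_0 g) (pow2_ge_0 C)). lra.
Qed.

Section Step.
Variables h tau : R.
Hypothesis h_gt0 : 0 < h.
Hypothesis h_le1 : h <= 1.
Hypothesis tau_gt0 : 0 < tau.

Definition e_coef : R := d - c * h ^ 2 / 6.
Definition exact_grid (j : nat) (i : Z) : R := theta (IZR i * h) (INR j * tau).
Definition err (j : nat) (i : Z) : R := theta_disc c g d theta h tau j i - exact_grid j i.
Definition D1 (w : Z -> R) (i : Z) : R := (w (i + 1)%Z - w (i - 1)%Z) / (2 * h).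
Definition D3 (w : Z -> R) (i : Z) : R :=
  (w (i + 2)%Z - 2 * w (i + 1)%Z + 2 * w (i - 1)%Z - w (i - 2)%Z) / (2 * h ^ 3).

Definition trunc_err (j : nat) (i : Z) : R :=
  (exact_grid (S j) i - exact_grid j i) / tau + c * D1 (exact_grid j) i
  + g * exact_grid j i * D1 (exact_grid j) i + e_coef * D3 (exact_grid j) i.

Definition err_op (j : nat) (i : Z) : R :=
  c * D1 (err j) i + e_coef * D3 (err j) i
  + g * (err j i * D1 (err j) i + exact_grid j i * D1 (err j) i + err j i * D1 (exact_grid j) i).

Lemma error_step j i : err (S j) i = err j i - tau * err_op j i - tau * trunc_err j i.
Proof.
  unfold err at 1. cbn [theta_disc]. unfold err_op, trunc_err, D1, D3, err, e_coef.
  field. lra.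
Qed.

Lemma err0 i : err 0 i = 0.
Proof. unfold err, exact_grid. cbn [theta_disc INR]. rewrite Rmult_0_l. ring. Qed.

Lemma e_coef_le : Rabs e_coef <= e_coef_bound.
Proof.
  unfold e_coef, e_coef_bound, Rminus. eapply Rle_trans; [apply Rabs_triang |]. rewrite Rabs_Ropp.
  assert (Rabs (c * h ^ 2 / 6) <= Rabs c).
  { unfold Rdiv. rewrite !Rabs_mult, (Rabs_pos_eq (h ^ 2)), (Rabs_pos_eq (/ 6))
      by (lra || apply pow_le; lra).
    pose proof (Rabs_pos c). assert (h ^ 2 <= 1) by nra. nra. }
  lra.
Qed.

Lemma exact_grid_add j i k : exact_grid j (i + k)%Z = theta (IZR i * h + IZR k * h) (INR j * tau).
Proof. unfold exact_grid. rewrite plus_IZR. f_equal. ring. Qed.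

Lemma exact_grid_sub j i k : exact_grid j (i - k)%Z = theta (IZR i * h - IZR k * h) (INR j * tau).
Proof. unfold exact_grid. rewrite minus_IZR. f_equal. ring. Qed.

Section Slice.
Variable j : nat.
Hypothesis time_in_range : 0 <= INR j * tau <= t0.

Lemma exact_grid_bounded i : Rabs (exact_grid j i) <= C.
Proof. apply (dx_bounded 0); auto; lia. Qed.

Lemma exact_grid_pred_diff_le i : Rabs (exact_grid j (i - 1)%Z - exact_grid j i) <= h * C.
Proof.
  rewrite exact_grid_sub. unfold exact_grid. simpl IZR. rewrite Rmult_1_l.
  assert (H := mean_value_bound _ (IZR i * h) (IZR i * h - h) C
                (smooth1_space (INR j * tau)) ltac:(lra)).
  replace (IZR i * h - h - IZR i * h) with (- h) in H by ring.
  rewrite Rabs_Ropp, (Rabs_pos_eq h) in H by lra.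
  apply H. intros z _. rewrite Derive_n_dx. apply (dx_bounded 1); auto; lia.
Qed.

Lemma D1_exact_grid_bounded i : Rabs (D1 (exact_grid j) i) <= C.
Proof.
  unfold D1. rewrite exact_grid_add, exact_grid_sub. set (x := IZR i * h).
  simpl IZR. rewrite !Rmult_1_l.
  assert (H := mean_value_bound _ (x - h) (x + h) C (smooth1_space (INR j * tau)) ltac:(lra)).
  replace (x + h - (x - h)) with (2 * h) in H by ring. rewrite (Rabs_pos_eq (2 * h)) in H by lra.
  unfold Rdiv. rewrite Rabs_mult, Rabs_inv, (Rabs_pos_eq (2 * h)) by lra.
  apply Rle_trans with (2 * h * C * / (2 * h)); [| right; field; lra].
  apply Rmult_le_compat_r; [left; apply Rinv_0_lt_compat; lra |].
  apply H. intros z _. rewrite Derive_n_dx. apply (dx_bounded 1); auto; lia.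
Qed.

End Slice.

Definition time_quotient_err (j : nat) (i : Z) : R :=
  let x := IZR i * h in let t := INR j * tau in
  (theta x (t + tau) - theta x t) / tau - dt 1 theta x t.

Definition central_quotient_err (j : nat) (i : Z) : R :=
  let x := IZR i * h in let t := INR j * tau in
  (theta (x + h) t - theta (x - h) t) / (2 * h) - dx 1 theta x t.

Definition third_quotient_err (j : nat) (i : Z) : R :=
  let x := IZR i * h in let t := INR j * tau in
  (theta (x + 2 * h) t - 2 * theta (x + h) t + 2 * theta (x - h) t - theta (x - 2 * h) t)
    / (2 * h ^ 3) - dx 3 theta x t.

Lemma truncation_error_eq j i : 0 <= INR j * tau <= t0 ->
  trunc_err j i = time_quotient_err j i + (c + g * exact_grid j i) * central_quotient_err j i
    + e_coef * third_quotient_err j i - c * h ^ 2 / 6 * dx 3 theta (IZR i * h) (INR j * tau).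
Proof.
  intros Ht. set (x := IZR i * h). set (t := INR j * tau).
  rewrite <- (Rplus_0_r (_ - _)), <- (Hpde x t Ht).
  unfold trunc_err, D1, D3, time_quotient_err, central_quotient_err, third_quotient_err.
  rewrite !exact_grid_add, !exact_grid_sub. unfold exact_grid. fold x t.
  replace (INR (S j) * tau) with (t + tau) by (unfold t; rewrite S_INR; ring).
  rewrite !Rmult_1_l. unfold e_coef. field. lra.
Qed.

Lemma quotient_errors_le j i : 0 <= INR j * tau -> INR (S j) * tau <= t0 ->
  let w := C / (1 + (IZR i * h) ^ 2) in
  Rabs (time_quotient_err j i) <= tau / 2 * w /\
  Rabs (central_quotient_err j i) <= h ^ 2 / 6 * (9 * w) /\
  Rabs (third_quotient_err j i) <= h ^ 2 * (9 * w).
Proof.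
  intros Hj HSj w. rewrite S_INR in HSj.
  unfold time_quotient_err, central_quotient_err, third_quotient_err.
  set (x := IZR i * h) in *. set (t := INR j * tau).
  assert (Ht : 0 <= t <= t0) by (unfold t; lra).
  assert (Hnear : forall k z, (k <= 5)%nat -> Rabs (z - x) <= 2 * h ->
            Rabs (Derive_n (fun y => theta y t) k z) <= 9 * w).
  { intros k z Hk Hz. rewrite Derive_n_dx. apply dx_decay_near; auto; lra. }
  split; [| split].
  - rewrite <- !Derive_n_dt.
    apply (forward_diff_error (fun s => theta x s)); [apply smooth1_time | exact tau_gt0 |].
    intros z Hz. rewrite Derive_n_dt. apply Hdecay_t. unfold t in *. lra.
  - rewrite <- !Derive_n_dx.
    apply (central_diff_error (fun y => theta y t)); [apply smooth1_space | exact h_gt0 |].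
    intros z Hz. apply Hnear; [lia | lra].
  - rewrite <- !Derive_n_dx.
    apply (third_diff_error (fun y => theta y t)); [apply smooth1_space | exact h_gt0 |].
    intros z Hz. apply Hnear; [lia | lra].
Qed.

Lemma truncation_error_le j i : 0 <= INR j * tau -> INR (S j) * tau <= t0 ->
  Rabs (trunc_err j i) <= consistency_const * (tau + h ^ 2) / (1 + (IZR i * h) ^ 2).
Proof.
  intros Hj HSj. assert (Ht : 0 <= INR j * tau <= t0) by (rewrite S_INR in HSj; lra).
  destruct (quotient_errors_le j i Hj HSj) as (A1 & A2 & A3).
  rewrite (truncation_error_eq j i Ht).
  set (w := C / (1 + (IZR i * h) ^ 2)) in *.
  set (a1 := time_quotient_err j i) in *. set (a2 := central_quotient_err j i) in *.
  set (a3 := third_quotient_err j i) in *.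
  assert (Hx : 0 < 1 + (IZR i * h) ^ 2) by nra. pose proof C_ge0.
  assert (Hw : 0 <= w) by (unfold w; apply Rdiv_le_0_compat; lra).
  assert (Hcg : Rabs (c + g * exact_grid j i) <= Rabs c + Rabs g * C).
  { eapply Rle_trans; [apply Rabs_triang |]. rewrite Rabs_mult.
    apply Rplus_le_compat_l, Rmult_le_compat_l; [apply Rabs_pos | apply exact_grid_bounded; auto]. }
  assert (Hd3 : Rabs (dx 3 theta (IZR i * h) (INR j * tau)) <= w) by (apply Hdecay_x; auto).
  assert (Tri : Rabs (a1 + (c + g * exact_grid j i) * a2 + e_coef * a3
                      - c * h ^ 2 / 6 * dx 3 theta (IZR i * h) (INR j * tau))
     <= Rabs a1 + Rabs (c + g * exact_grid j i) * Rabs a2 + Rabs e_coef * Rabs a3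
        + Rabs c * (h ^ 2 / 6) * Rabs (dx 3 theta (IZR i * h) (INR j * tau))).
  { replace (Rabs c * (h ^ 2 / 6)) with (Rabs (c * h ^ 2 / 6))
      by (unfold Rdiv; rewrite !Rabs_mult, Rabs_inv, (Rabs_pos_eq (h ^ 2)), (Rabs_pos_eq 6);
          [ring | lra | apply pow_le; lra]).
    rewrite <- !Rabs_mult. unfold Rminus.
    eapply Rle_trans; [apply Rabs_triang |]. rewrite Rabs_Ropp. apply Rplus_le_compat_r.
    eapply Rle_trans; [apply Rabs_triang |]. apply Rplus_le_compat_r. apply Rabs_triang. }
  assert (Hh2 : 0 <= h ^ 2) by (apply pow_le; lra).
  pose proof (Rabs_pos c); pose proof (Rabs_pos g).
  pose proof e_coef_bound_ge0; pose proof e_coef_le.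
  assert (Rabs (c + g * exact_grid j i) * Rabs a2 <= (Rabs c + Rabs g * C) * (h ^ 2 / 6 * (9 * w)))
    by (apply Rmult_le_compat; auto; apply Rabs_pos).
  assert (Rabs e_coef * Rabs a3 <= e_coef_bound * (h ^ 2 * (9 * w)))
    by (apply Rmult_le_compat; auto; apply Rabs_pos).
  assert (Rabs c * (h ^ 2 / 6) * Rabs (dx 3 theta (IZR i * h) (INR j * tau))
          <= Rabs c * (h ^ 2 / 6) * w)
    by (apply Rmult_le_compat_l; auto; apply Rmult_le_pos; lra).
  replace (consistency_const * (tau + h ^ 2) / (1 + (IZR i * h) ^ 2))
    with ((1 + 2 * Rabs c + 2 * Rabs g * C + 9 * e_coef_bound) * (tau + h ^ 2) * w)
    by (unfold consistency_const, w; field; lra).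
  assert (0 <= tau * w) by (apply Rmult_le_pos; lra).
  assert (0 <= h ^ 2 * w) by (apply Rmult_le_pos; lra).
  assert (0 <= Rabs c * (tau * w)) by (apply Rmult_le_pos; lra).
  assert (0 <= Rabs c * (h ^ 2 * w)) by (apply Rmult_le_pos; lra).
  assert (0 <= Rabs g * C * (tau * w)) by (apply Rmult_le_pos; [apply Rmult_le_pos |]; lra).
  assert (0 <= Rabs g * C * (h ^ 2 * w)) by (apply Rmult_le_pos; [apply Rmult_le_pos |]; lra).
  assert (0 <= e_coef_bound * (tau * w)) by (apply Rmult_le_pos; lra).
  lra.
Qed.

Definition trunc_l2_bound : R := consistency_const ^ 2 * (tau + h ^ 2) ^ 2 * (1 + 4 / h).

Lemma trunc_l2_bound_ge0 : 0 <= trunc_l2_bound.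
Proof.
  unfold trunc_l2_bound. assert (0 < 4 / h) by (apply Rdiv_lt_0_compat; lra).
  apply Rmult_le_pos; [apply Rmult_le_pos; apply pow2_ge_0 | lra].
Qed.

Lemma truncation_error_l2 j : 0 <= INR j * tau -> INR (S j) * tau <= t0 ->
  l2 (trunc_err j) /\ zsum (fun i => trunc_err j i ^ 2) <= trunc_l2_bound.
Proof.
  intros Hj HSj. set (K0 := consistency_const ^ 2 * (tau + h ^ 2) ^ 2).
  assert (HK0 : 0 <= K0) by (apply Rmult_le_pos; apply pow2_ge_0).
  assert (Hp : forall i, trunc_err j i ^ 2 <= K0 * (1 / (1 + (IZR i * h) ^ 2))).
  { intros i. assert (Hy : 1 <= 1 + (IZR i * h) ^ 2) by nra.
    eapply Rle_trans; [apply pow_maj_Rabs, truncation_error_le; auto |].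
    set (y := 1 + (IZR i * h) ^ 2) in *.
    replace ((consistency_const * (tau + h ^ 2) / y) ^ 2) with (K0 * (1 / y) * (1 / y))
      by (unfold K0; field; lra).
    assert (Hq : 0 <= 1 / y <= 1).
    { split; [apply Rdiv_le_0_compat; lra |].
      unfold Rdiv. rewrite Rmult_1_l, <- Rinv_1. apply Rinv_le_contravar; lra. }
    set (q := 1 / y) in *.
    assert (0 <= K0 * q * (1 - q)) by (apply Rmult_le_pos; [apply Rmult_le_pos |]; lra).
    lra. }
  assert (Hsym : forall N, symsum (fun i => trunc_err j i ^ 2) N <= K0 * (1 + 4 / h)).
  { intros N. eapply Rle_trans; [apply (symsum_le _ _ N Hp) |].
    rewrite symsum_scal. apply Rmult_le_compat_l; auto. apply symsum_decay_weight_bound; auto. }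
  assert (Hs : l2 (trunc_err j)).
  { exists (K0 * (1 + 4 / h)). intros N.
    rewrite (symsum_ext _ (fun i => trunc_err j i ^ 2)) by (intros; apply Rabs_pos_eq, pow2_ge_0).
    apply Hsym. }
  split; auto. apply zsum_le_bound; auto.
Qed.

(* Summation by parts: [err * err_op] is a discrete divergence up to [nonlinear_rem]. *)
Definition flux (j : nat) (i : Z) : R :=
  c * (err j i * err j (i + 1)%Z) / (2 * h)
  + e_coef * (err j i * err j (i + 2)%Z + err j (i - 1)%Z * err j (i + 1)%Z
              - 2 * (err j i * err j (i + 1)%Z))
    / (2 * h ^ 3)
  + g * exact_grid j i * (err j i * err j (i + 1)%Z) / (2 * h).

Definition nonlinear_rem (j : nat) (i : Z) : R :=
  g * (exact_grid j (i - 1)%Z - exact_grid j i) * err j (i - 1)%Z * err j i / (2 * h)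
  + g * err j i ^ 2 * D1 (err j) i + g * err j i ^ 2 * D1 (exact_grid j) i.

Lemma error_energy_identity j i :
  err j i * err_op j i = flux j i - flux j (i - 1)%Z + nonlinear_rem j i.
Proof.
  unfold flux, nonlinear_rem, err_op, D1, D3.
  replace (i - 1 + 1)%Z with i by ring. replace (i - 1 + 2)%Z with (i + 1)%Z by ring.
  replace (i - 1 - 1)%Z with (i - 2)%Z by ring.
  field. lra.
Qed.

Lemma l2_shift f k : l2 f -> l2 (fun i => f (i + k)%Z).
Proof. exact (zsummable_shift (fun i => f i ^ 2) k). Qed.

Lemma flux_summable j : 0 <= INR j * tau <= t0 -> l2 (err j) -> zsummable (flux j).
Proof.
  intros Ht Hl2.
  assert (P1 := zsummable_mul _ (fun i => err j (i + 1)%Z) Hl2 (l2_shift _ 1 Hl2)).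
  assert (P2 := zsummable_mul _ (fun i => err j (i + 2)%Z) Hl2 (l2_shift _ 2 Hl2)).
  assert (P3 := zsummable_mul (fun i => err j (i - 1)%Z) (fun i => err j (i + 1)%Z)
                  (l2_shift _ (-1) Hl2) (l2_shift _ 1 Hl2)).
  assert (P4 := zsummable_bounded_mul (exact_grid j) _ C (exact_grid_bounded j Ht) P1).
  apply (zsummable_ext (fun i => c / (2 * h) * (err j i * err j (i + 1)%Z)
     + e_coef / (2 * h ^ 3) * (err j i * err j (i + 2)%Z)
     + e_coef / (2 * h ^ 3) * (err j (i - 1)%Z * err j (i + 1)%Z)
     + (- 2 * e_coef / (2 * h ^ 3)) * (err j i * err j (i + 1)%Z)
     + g / (2 * h) * (exact_grid j i * (err j i * err j (i + 1)%Z)))).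
  - intros i. unfold flux. field. lra.
  - apply zsummable_lin5; auto.
Qed.

Variable Kp : R.
Hypothesis tau_le_Kh6 : tau <= Kp * h ^ 6.
Hypothesis tau_le1 : tau <= 1.

Lemma Kp_ge0 : 0 <= Kp.
Proof. assert (0 < h ^ 6) by (apply pow_lt; lra). nra. Qed.

Definition growth_rate : R := 1 + 8 * nonlinear_const + 10 * Kp * operator_const.

Lemma growth_rate_ge0 : 0 <= growth_rate.
Proof.
  unfold growth_rate. pose proof nonlinear_const_ge0.
  pose proof (Rmult_le_pos _ _ Kp_ge0 operator_const_ge0). lra.
Qed.

Definition five_point_sq (j : nat) (i : Z) : R :=
  err j (i + 2)%Z ^ 2 + err j (i + 1)%Z ^ 2 + err j i ^ 2
  + err j (i - 1)%Z ^ 2 + err j (i - 2)%Z ^ 2.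

Definition step_majorant (j : nat) (i : Z) : R :=
  (1 + tau) * err j i ^ 2 + (- 2 * tau * (1 + tau)) * (flux j i - flux j (i - 1)%Z)
  + (2 * tau * (1 + tau) * nonlinear_const) * (err j (i - 1)%Z ^ 2 + err j i ^ 2)
  + ((1 + tau) * tau ^ 2 * (operator_const / h ^ 6)) * five_point_sq j i
  + (2 * tau) * trunc_err j i ^ 2.

Lemma error_sq_le_majorant j i : 0 <= INR j * tau <= t0 -> (forall k, Rabs (err j k) <= h) ->
  err (S j) i ^ 2 <= step_majorant j i.
Proof.
  intros Ht He. rewrite error_step. eapply Rle_trans.
  - apply (perturbed_step_sq_le tau (err j i) (err_op j i) (trunc_err j i)
             (flux j i - flux j (i - 1)%Z)
             (nonlinear_rem j i) (nonlinear_const * (err j (i - 1)%Z ^ 2 + err j i ^ 2))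
             (operator_const / h ^ 6 * five_point_sq j i)); auto.
    + rewrite error_energy_identity. ring.
    + apply nonlinear_remainder_le; auto.
      * apply exact_grid_pred_diff_le; auto.
      * apply central_quotient_abs_le1; auto.
      * apply D1_exact_grid_bounded; auto.
    + unfold err_op, five_point_sq. unfold D1 at 1 2 3, D3.
      apply scheme_operator_sq_le; auto;
        [apply e_coef_le | apply exact_grid_bounded | apply D1_exact_grid_bounded]; auto.
  - right. unfold step_majorant. ring.
Qed.

Lemma zsum_step_majorant j : 0 <= INR j * tau -> INR (S j) * tau <= t0 -> l2 (err j) ->
  let E := zsum (fun i => err j i ^ 2) in
  zsummable (step_majorant j) /\
  zsum (step_majorant j) = (1 + tau) * E + 2 * tau * (1 + tau) * nonlinear_const * (2 * E)
    + (1 + tau) * tau ^ 2 * (operator_const / h ^ 6) * (5 * E)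
    + 2 * tau * zsum (fun i => trunc_err j i ^ 2).
Proof.
  intros Hj HSj Hl2 E.
  assert (Ht : 0 <= INR j * tau <= t0) by (rewrite S_INR in HSj; lra).
  assert (Hsh : forall k, zsummable (fun i => err j (i + k)%Z ^ 2))
    by (intros k; exact (l2_shift _ k Hl2)).
  assert (HQ := flux_summable j Ht Hl2).
  assert (HdQ : zsummable (fun i => flux j i - flux j (i - 1)%Z)).
  { apply (zsummable_ext (fun i => flux j i + (-1) * flux j (i - 1)%Z)); [intros; ring |].
    apply zsummable_plus, zsummable_scal, zsummable_pred; auto. }
  assert (Hpair : zsummable (fun i => err j (i - 1)%Z ^ 2 + err j i ^ 2))
    by (apply zsummable_plus; [apply (Hsh (-1)%Z) | exact Hl2]).
  assert (H5 : zsummable (five_point_sq j))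
    by (unfold five_point_sq; repeat apply zsummable_plus; auto; apply Hsh).
  destruct (truncation_error_l2 j Hj HSj) as [Hr _].
  split; [unfold step_majorant; apply zsummable_lin5; auto |].
  unfold step_majorant. rewrite zsum_lin5; auto.
  assert (SdQ : zsum (fun i => flux j i - flux j (i - 1)%Z) = 0).
  { rewrite (zsum_ext _ (fun i => flux j i + (-1) * flux j (i - 1)%Z)) by (intros; ring).
    assert (HQm := zsummable_pred _ HQ).
    rewrite zsum_plus, zsum_scal, zsum_pred
      by (exact HQ || exact HQm || exact (zsummable_scal _ _ HQm)).
    ring. }
  assert (Spair : zsum (fun i => err j (i - 1)%Z ^ 2 + err j i ^ 2) = 2 * E).
  { rewrite zsum_plus, (zsum_pred (fun i => err j i ^ 2)); auto; [unfold E; ring |].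
    apply (Hsh (-1)%Z). }
  assert (S5 : zsum (five_point_sq j) = 5 * E).
  { unfold five_point_sq.
    rewrite (zsum_ext _ (fun i => 1 * err j (i + 2)%Z ^ 2 + 1 * err j (i + 1)%Z ^ 2
        + 1 * err j i ^ 2 + 1 * err j (i + -1)%Z ^ 2 + 1 * err j (i + -2)%Z ^ 2))
      by (intros; rewrite !Rmult_1_l; reflexivity).
    rewrite zsum_lin5 by (apply Hsh || exact Hl2).
    rewrite !(zsum_shift (fun i => err j i ^ 2)) by exact Hl2. unfold E. ring. }
  rewrite SdQ, Spair, S5. unfold E. ring.
Qed.

Lemma energy_step j : 0 <= INR j * tau -> INR (S j) * tau <= t0 -> l2 (err j) ->
  zsum (fun i => err j i ^ 2) <= h ^ 2 ->
  l2 (err (S j)) /\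
  zsum (fun i => err (S j) i ^ 2)
  <= (1 + tau * growth_rate) * zsum (fun i => err j i ^ 2) + 2 * tau * trunc_l2_bound.
Proof.
  intros Hj HSj Hl2 Hsmall.
  assert (Ht : 0 <= INR j * tau <= t0) by (rewrite S_INR in HSj; lra).
  assert (Hsq : forall i, 0 <= err j i ^ 2) by (intros; apply pow2_ge_0).
  assert (Hsup := abs_le_of_zsum_sq_le _ h Hl2 (Rlt_le _ _ h_gt0) Hsmall).
  assert (HE0 := Rle_trans _ _ _ (Hsq 0%Z) (term_le_zsum _ 0%Z Hl2 Hsq)).
  destruct (zsum_step_majorant j Hj HSj Hl2) as [Hms Hmeq].
  set (E := zsum (fun i => err j i ^ 2)) in *.
  assert (Hpw := fun i => error_sq_le_majorant j i Ht Hsup).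
  assert (HlS : l2 (err (S j))).
  { apply (zsummable_le _ (step_majorant j) Hms). intros i.
    pose proof (Hpw i); pose proof (pow2_ge_0 (err (S j) i)).
    rewrite !Rabs_pos_eq; lra. }
  split; auto.
  eapply Rle_trans; [apply (zsum_le _ _ HlS Hms Hpw) | rewrite Hmeq].
  destruct (truncation_error_l2 j Hj HSj) as [_ Hrb].
  pose proof nonlinear_const_ge0. pose proof operator_const_ge0.
  pose proof (Rmult_le_pos _ _ Kp_ge0 operator_const_ge0).
  assert (Hh6 : 0 < h ^ 6) by (apply pow_lt; lra).
  set (Y := operator_const / h ^ 6).
  assert (HY : 0 <= Y) by (apply Rdiv_le_0_compat; lra).
  (* [tau <= Kp h^6] is exactly what absorbs the [h^-6] of the dispersive operator *)
  assert (HtY : tau * Y <= Kp * operator_const).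
  { unfold Y. replace (Kp * operator_const) with (Kp * h ^ 6 * (operator_const / h ^ 6))
      by (field; lra).
    apply Rmult_le_compat_r; auto. }
  assert (0 <= tau * nonlinear_const * E * (1 - tau))
    by (apply Rmult_le_pos; [apply Rmult_le_pos; [apply Rmult_le_pos |] |]; lra).
  assert (0 <= tau * E * (1 + tau) * (Kp * operator_const - tau * Y))
    by (apply Rmult_le_pos; [apply Rmult_le_pos; [apply Rmult_le_pos |] |]; lra).
  assert (0 <= tau * E * (1 - tau) * (Kp * operator_const))
    by (apply Rmult_le_pos; [apply Rmult_le_pos; [apply Rmult_le_pos |] |]; lra).
  assert (2 * tau * zsum (fun i => trunc_err j i ^ 2) <= 2 * tau * trunc_l2_bound)
    by (apply Rmult_le_compat_l; lra).
  unfold growth_rate. nra.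
Qed.

Lemma gronwall_factor_le j : INR j * tau <= t0 ->
  INR j * tau * 2 * trunc_l2_bound * (1 + tau * growth_rate) ^ j
  <= t0 * 2 * trunc_l2_bound * exp (growth_rate * t0).
Proof.
  intros Hj. pose proof trunc_l2_bound_ge0. pose proof growth_rate_ge0.
  assert (0 <= tau * growth_rate) by (apply Rmult_le_pos; lra).
  assert (Hq : (1 + tau * growth_rate) ^ j <= exp (growth_rate * t0)).
  { apply pow_1plus_le_exp; auto.
    replace (tau * growth_rate * INR j) with (growth_rate * (INR j * tau)) by ring.
    apply Rmult_le_compat_l; lra. }
  assert (0 <= INR j * tau) by (apply Rmult_le_pos; [apply pos_INR | lra]).
  apply Rmult_le_compat; [| apply pow_le; lra | | exact Hq].
  - apply Rmult_le_pos; [apply Rmult_le_pos |]; lra.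
  - apply Rmult_le_compat_r; [lra |]. apply Rmult_le_compat_r; lra.
Qed.

Lemma error_l2_gronwall :
  t0 * 2 * trunc_l2_bound * exp (growth_rate * t0) <= h ^ 2 ->
  forall j, INR j * tau <= t0 ->
  l2 (err j) /\
  zsum (fun i => err j i ^ 2) <= INR j * tau * 2 * trunc_l2_bound * (1 + tau * growth_rate) ^ j.
Proof.
  intros Hboot. pose proof trunc_l2_bound_ge0.
  assert (Hq1 : 1 <= 1 + tau * growth_rate)
    by (pose proof (Rmult_le_pos _ _ (Rlt_le _ _ tau_gt0) growth_rate_ge0); lra).
  induction j; intros Hj.
  - assert (Ez : forall i, 0 = err 0 i ^ 2) by (intros; rewrite err0; ring).
    split; [apply (zsummable_ext _ _ Ez zsummable0) |].
    rewrite <- (zsum_ext _ _ Ez), zsum0. simpl. lra.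
  - assert (Hj0 : 0 <= INR j * tau) by (apply Rmult_le_pos; [apply pos_INR | lra]).
    assert (Hj' : INR j * tau <= t0) by (rewrite S_INR in Hj; lra).
    destruct (IHj Hj') as [Hl2 HS].
    assert (Hsmall : zsum (fun i => err j i ^ 2) <= h ^ 2)
      by (eapply Rle_trans; [apply HS |];
          eapply Rle_trans; [apply gronwall_factor_le, Hj' | apply Hboot]).
    destruct (energy_step j Hj0 Hj Hl2 Hsmall) as [Hl2' HS'].
    split; auto. eapply Rle_trans; [apply HS' |].
    set (q := 1 + tau * growth_rate) in *.
    assert (Hqj : 1 <= q ^ j) by (rewrite <- (pow1 j); apply pow_incr; lra).
    rewrite S_INR. change (q ^ S j) with (q * q ^ j).
    assert (q * zsum (fun i => err j i ^ 2) <= q * (INR j * tau * 2 * trunc_l2_bound * q ^ j))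
      by (apply Rmult_le_compat_l; lra).
    assert (0 <= tau * trunc_l2_bound * (q * q ^ j - 1)) by (apply Rmult_le_pos; nra).
    nra.
Qed.

Lemma error_l2_bound :
  t0 * 2 * trunc_l2_bound * exp (growth_rate * t0) <= h ^ 2 ->
  forall j, INR j * tau <= t0 ->
  l2 (err j) /\ zsum (fun i => err j i ^ 2) <= t0 * 2 * trunc_l2_bound * exp (growth_rate * t0).
Proof.
  intros Hboot j Hj. destruct (error_l2_gronwall Hboot j Hj) as [Hl2 HS].
  split; [exact Hl2 | eapply Rle_trans; [exact HS | apply gronwall_factor_le, Hj]].
Qed.

End Step.

Lemma err_partial_limit h tau j : l2 (err h tau j) ->
  is_lim_seq (err_partial c g d theta h tau j) (h * zsum (fun i => err h tau j i ^ 2)).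
Proof.
  intros Hl2.
  apply (is_lim_seq_ext (fun N => h * symsum (fun i => err h tau j i ^ 2) N)).
  - intros N. rewrite <- symsum_scal, <- (symsum_ext (fun i => err h tau j i ^ 2 * h))
      by (intros; ring).
    symmetry. exact (sum_f_R0_symsum (fun i => err h tau j i ^ 2 * h) N).
  - exact (is_lim_seq_scal_l _ h _ (is_lim_seq_zsum _ Hl2)).
Qed.

Definition err_const (Kp : R) : R := 10 * t0 * exp (growth_rate Kp * t0) * consistency_const ^ 2.

Lemma err_const_ge0 Kp : 0 <= err_const Kp.
Proof.
  unfold err_const. pose proof (exp_pos (growth_rate Kp * t0)).
  pose proof (pow2_ge_0 consistency_const).
  apply Rmult_le_pos; [apply Rmult_le_pos |]; nra.
Qed.

Lemma scaled_error_bound h tau Kp : 0 < h -> h <= 1 ->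
  h * (t0 * 2 * trunc_l2_bound h tau * exp (growth_rate Kp * t0))
  <= err_const Kp * (tau + h ^ 2) ^ 2.
Proof.
  intros Hh Hh1. unfold err_const, trunc_l2_bound.
  replace (h * (t0 * 2 * (consistency_const ^ 2 * (tau + h ^ 2) ^ 2 * (1 + 4 / h))
                * exp (growth_rate Kp * t0)))
    with (2 * t0 * exp (growth_rate Kp * t0) * consistency_const ^ 2 * (tau + h ^ 2) ^ 2 * (h + 4))
    by (field; lra).
  assert (0 <= 2 * t0 * exp (growth_rate Kp * t0) * consistency_const ^ 2 * (tau + h ^ 2) ^ 2).
  { pose proof (exp_pos (growth_rate Kp * t0)).
    apply Rmult_le_pos; [apply Rmult_le_pos; [apply Rmult_le_pos |] |]; try apply pow2_ge_0; nra. }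
  nra.
Qed.

(* The energy estimate needs [||err||^2 <= h^2] as an a priori bound; for small [h] the
   final bound [O(h^3)] recovers it. *)
Lemma bootstrap_condition h tau Kp : 0 < h -> h <= 1 -> 0 <= tau <= h ^ 2 ->
  4 * err_const Kp * h <= 1 ->
  t0 * 2 * trunc_l2_bound h tau * exp (growth_rate Kp * t0) <= h ^ 2.
Proof.
  intros Hh Hh1 Htau HM. pose proof (err_const_ge0 Kp).
  apply Rmult_le_reg_l with h; [exact Hh |].
  eapply Rle_trans; [apply scaled_error_bound; auto |].
  assert ((tau + h ^ 2) ^ 2 <= 4 * h ^ 4).
  { replace (4 * h ^ 4) with ((2 * h ^ 2) ^ 2) by ring.
    apply pow_incr. pose proof (pow2_ge_0 h). nra. }
  assert (err_const Kp * (tau + h ^ 2) ^ 2 <= err_const Kp * (4 * h ^ 4))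
    by (apply Rmult_le_compat_l; auto).
  assert (0 <= h ^ 3) by (apply pow_le; lra).
  replace (err_const Kp * (4 * h ^ 4)) with (4 * err_const Kp * h * h ^ 3) in * by ring.
  replace (h * h ^ 2) with (1 * h ^ 3) by ring.
  assert (4 * err_const Kp * h * h ^ 3 <= 1 * h ^ 3) by (apply Rmult_le_compat_r; lra).
  lra.
Qed.

End Scheme.

Theorem mainTheorem4
  (c g d t0 : R) (theta : R -> R -> R) (C : R)
  (Ht0 : 0 < t0)
  (Hsmooth : smooth2 theta)
  (Hpde : forall x t, 0 <= t <= t0 ->
     dt 1 theta x t + c * dx 1 theta x t
     + g * theta x t * dx 1 theta x t + d * dx 3 theta x t = 0)
  (Hdecay_t : forall x t, 0 <= t <= t0 ->
     Rabs (dt 2 theta x t) <= C / (1 + x ^ 2))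
  (Hdecay_x : forall (k : nat) x t, (k <= 5)%nat -> 0 <= t <= t0 ->
     Rabs (dx k theta x t) <= C / (1 + x ^ 2))
  (K : R) :
  exists M : R, exists h0 : R, 0 < h0 /\
    forall h tau : R, 0 < h -> h < h0 -> 0 < tau -> tau <= K * h ^ 6 ->
    forall j : nat, INR j * tau <= t0 ->
      ex_finite_lim_seq (err_partial c g d theta h tau j) /\
      sqrt (real (Lim_seq (err_partial c g d theta h tau j)))
        <= M * (tau + h ^ 2).
Proof.
  assert (Ht0' : 0 <= t0) by lra.
  set (M0 := err_const c g d t0 C (Rabs K)).
  assert (HM0 : 0 <= M0) by exact (err_const_ge0 c g d t0 C Ht0' (Rabs K)).
  destruct (small_enough (4 * M0) (Rabs K)) as [h0 [Hh0 Hsmall]]; [lra | apply Rabs_pos |].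
  exists (sqrt M0), h0. split; [exact Hh0 |].
  intros h tau Hh Hhh0 Htau HtK j Hj.
  destruct (Hsmall h Hh Hhh0) as (Hh1 & HMh & HKh).
  assert (Htau_h := tau_le_sq K h tau Hh Hh1 HKh HtK).
  assert (HtKabs : tau <= Rabs K * h ^ 6).
  { eapply Rle_trans; [exact HtK |]. apply Rmult_le_compat_r; [apply pow_le; lra | apply Rle_abs]. }
  assert (Htau1 : tau <= 1) by nra.
  assert (Hboot := bootstrap_condition c g d t0 C Ht0' h tau (Rabs K) Hh Hh1 ltac:(lra) HMh).
  destruct (error_l2_bound c g d t0 theta C Hsmooth Hpde Hdecay_t Hdecay_x Ht0' h tau Hh Hh1 Htau
              (Rabs K) HtKabs Htau1 Hboot j Hj) as [Hl2 HS].
  assert (Hlim := err_partial_limit c g d theta h tau j Hl2).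
  split; [eexists; exact Hlim |].
  rewrite (is_lim_seq_unique _ _ Hlim). simpl real.
  assert (Herr : h * zsum (fun i => err c g d theta h tau j i ^ 2) <= M0 * (tau + h ^ 2) ^ 2).
  { eapply Rle_trans; [| apply (scaled_error_bound c g d t0 C Ht0' h tau (Rabs K) Hh Hh1)].
    apply Rmult_le_compat_l; lra. }
  eapply Rle_trans; [apply sqrt_le_1_alt, Herr |].
  rewrite sqrt_mult_alt, sqrt_pow2 by (lra || nra). lra.
Qed.
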